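(* Let $k\ge 0$. (a) If $u\in\mathcal P_k^\perp(K)$ satisfies $u|_e=0$ on some face $e\in\mathcal E(K)$, then $u=0$. (b) If $\mathbf q\in\boldsymbol{\mathcal P}_k^\perp(K)$ satisfies $\mathbf q\cdot\mathbf n=0$ on $\partial K$, then $\mathbf q=\mathbf 0$.
   Context: $K\subset\mathbb R^d$ ($d\in\{2,3\}$) is a nondegenerate triangle/tetrahedron with outward unit normal $\mathbf n$ and set of faces (edges if $d=2$) $\mathcal E(K)$. $\mathcal P_k(K)$ denotes polynomials of total degree at most $k$ on $K$, with $\mathcal P_{-1}(K)=\{0\}$. $(\cdot,\cdot)_K$ is the $L^2(K)$ inner product. $\mathcal P_k^\perp(K)=\{u\in\mathcal P_k(K):(u,v)_K=0\ \forall v\in\mathcal P_{k-1}(K)\}$ and $\boldsymbol{\mathcal P}_k^\perp(K)=\mathcal P_k^\perp(K)^d$. *)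

From Stdlib Require Import Reals Lra Lia List ClassicalEpsilon.
Open Scope R_scope.

(* Points of R^d are represented as functions nat -> R; only the
   coordinates 0..d-1 are meaningful. *)

Fixpoint rsum (n : nat) (f : nat -> R) : R :=
  match n with O => 0 | S m => rsum m f + f m end.

Definition dot (d : nat) (a b : nat -> R) : R := rsum d (fun j => a j * b j).

(* monomial x^alpha, alpha given as the list of exponents starting at
   coordinate i *)
Fixpoint mono_from (a : list nat) (i : nat) (x : nat -> R) : R :=
  match a with
  | nil => 1
  | ai :: a' => x i ^ ai * mono_from a' (S i) x
  end.

Definition mono (a : list nat) (x : nat -> R) : R := mono_from a 0 x.

Definition eval_terms (l : list (R * list nat)) (x : nat -> R) : R :=
  fold_right (fun p acc => fst p * mono (snd p) x + acc) 0 l.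

Definition is_poly (d k : nat) (f : (nat -> R) -> R) : Prop :=
  exists l : list (R * list nat),
    Forall (fun p => length (snd p) = d /\ (list_sum (snd p) <= k)%nat) l /\
    forall x, f x = eval_terms l x.

(* P_{k-1}, with the convention P_{-1} = {0} *)
Definition is_poly_prev (d k : nat) (v : (nat -> R) -> R) : Prop :=
  match k with
  | O => forall x, v x = 0
  | S j => is_poly d j v
  end.

Definition in_simplex (d : nat) (V : nat -> nat -> R) (x : nat -> R) : Prop :=
  exists lam : nat -> R,
    (forall i, (i <= d)%nat -> 0 <= lam i) /\
    rsum (S d) lam = 1 /\
    forall j, (j < d)%nat -> x j = rsum (S d) (fun i => lam i * V i j).

Definition in_face (d : nat) (V : nat -> nat -> R) (i : nat) (x : nat -> R) : Prop :=
  exists lam : nat -> R,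
    (forall l, (l <= d)%nat -> 0 <= lam l) /\
    lam i = 0 /\
    rsum (S d) lam = 1 /\
    forall j, (j < d)%nat -> x j = rsum (S d) (fun l => lam l * V l j).

Definition nondegenerate (d : nat) (V : nat -> nat -> R) : Prop :=
  forall lam : nat -> R,
    rsum (S d) lam = 0 ->
    (forall j, (j < d)%nat -> rsum (S d) (fun i => lam i * V i j) = 0) ->
    forall i, (i <= d)%nat -> lam i = 0.

Definition outward_unit_normal (d : nat) (V : nat -> nat -> R) (i : nat)
  (n : nat -> R) : Prop :=
  dot d n n = 1 /\
  (forall j l, (j <= d)%nat -> (l <= d)%nat -> j <> i -> l <> i ->
     dot d n (fun c => V j c - V l c) = 0) /\
  (forall j, (j <= d)%nat -> j <> i -> dot d n (fun c => V i c - V j c) < 0).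

(* total version of the 1D Riemann integral (0 if not integrable) *)
Definition RInt_tot (f : R -> R) (a b : R) : R :=
  match excluded_middle_informative (inhabited (Riemann_integrable f a b)) with
  | left h => RiemannInt (epsilon h (fun _ => True))
  | right _ => 0
  end.

Definition upd (x : nat -> R) (m : nat) (t : R) : nat -> R :=
  fun c => if Nat.eqb c m then t else x c.

Fixpoint int_box (M : R) (n : nat) (F : (nat -> R) -> R) : R :=
  match n with
  | O => F (fun _ => 0)
  | S m => RInt_tot (fun t => int_box M m (fun x => F (upd x m t))) (- M) M
  end.

Definition indK (d : nat) (V : nat -> nat -> R) (x : nat -> R) : R :=
  match excluded_middle_informative (in_simplex d V x) with
  | left _ => 1
  | right _ => 0
  end.

(* a box [-M,M]^d containing K *)
Definition bound (d : nat) (V : nat -> nat -> R) : R :=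
  1 + rsum (S d) (fun i => rsum d (fun j => Rabs (V i j))).

Definition ipK (d : nat) (V : nat -> nat -> R) (u v : (nat -> R) -> R) : R :=
  int_box (bound d V) d (fun x => indK d V x * (u x * v x)).

Definition Pperp (d : nat) (V : nat -> nat -> R) (k : nat) (u : (nat -> R) -> R) : Prop :=
  is_poly d k u /\ forall v, is_poly_prev d k v -> ipK d V u v = 0.

(* Proof of (a).  Let lambda_0, ..., lambda_d be the barycentric coordinates of
   K; they are affine and exist because the vertex matrix is invertible.  A
   Taylor division of u along the edge direction V_i - V_o, with o <> i, gives
   u = lambda_i * w on K for some w in P_{k-1}, as u vanishes on the face
   {lambda_i = 0}.  Orthogonality of u to w then says that the integral over K
   of the nonnegative polynomial lambda_i * w^2 is zero.  Hence this polynomial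
   vanishes on a box inside the interior of K, where lambda_i > 0, so w and u
   vanish on that box, and u = 0 by the identity theorem for polynomials.

   Proof of (b).  The gradient c_l of lambda_l is a negative multiple of the
   outward normal of the face opposite V_l, so c_l . q lies in P_k^perp(K) and
   vanishes on that face; it is zero by (a).  As sum_l (c_l . y) V_l = y for
   every vector y, we get q = sum_l (c_l . q) V_l = 0. *)

From Pilot Require Import Defs.
From Stdlib Require Import Reals Lra Lia List FunctionalExtensionality ClassicalEpsilon.
From mathcomp Require all_boot all_algebra Rstruct.
From Coquelicot Require Import Coquelicot.
Open Scope R_scope.

(** * Finite sums and coordinate updates *)

Lemma rsum_ext n f g : (forall j, (j < n)%nat -> f j = g j) -> rsum n f = rsum n g.
Proof.
  induction n; simpl; intros H; auto.
  rewrite IHn by (intros; apply H; lia). rewrite H by lia. auto.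
Qed.

Lemma rsum_plus n f g : rsum n (fun j => f j + g j) = rsum n f + rsum n g.
Proof. induction n; simpl; [lra|]. rewrite IHn. lra. Qed.

Lemma rsum_minus n f g : rsum n (fun j => f j - g j) = rsum n f - rsum n g.
Proof. induction n; simpl; [lra|]. rewrite IHn. lra. Qed.

Lemma rsum_scal n c f : rsum n (fun j => c * f j) = c * rsum n f.
Proof. induction n; simpl; [lra|]. rewrite IHn. lra. Qed.

Lemma rsum_zero n : rsum n (fun _ => 0) = 0.
Proof. induction n; simpl; [lra|]. rewrite IHn. lra. Qed.

Lemma rsum_const n a : rsum n (fun _ => a) = INR n * a.
Proof. induction n; simpl; [ring|]. rewrite IHn. destruct n; simpl; ring. Qed.

Lemma rsum_change n f g m : (m < n)%nat -> (forall j, j <> m -> f j = g j) ->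
  rsum n f = rsum n g + (f m - g m).
Proof.
  induction n; intros Hm H; [lia|]. simpl.
  destruct (Nat.eq_dec n m) as [E|Hn].
  - subst m. rewrite (rsum_ext n f g) by (intros j Hj; apply H; lia). lra.
  - rewrite IHn by (auto; lia). rewrite (H n) by auto. lra.
Qed.

Lemma rsum_delta n m (f : nat -> R) : (m < n)%nat ->
  rsum n (fun l => f l * (if Nat.eqb m l then 1 else 0)) = f m.
Proof.
  intros Hm. rewrite (rsum_change n _ (fun _ => 0) m Hm), rsum_zero, Nat.eqb_refl by
    (intros j Hj; destruct (Nat.eqb_spec m j); [lia|ring]).
  ring.
Qed.

Lemma rsum_swap a b (f : nat -> nat -> R) :
  rsum a (fun i => rsum b (fun j => f i j)) = rsum b (fun j => rsum a (fun i => f i j)).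
Proof. induction a; simpl. rewrite rsum_zero. auto. rewrite IHa, <- rsum_plus. auto. Qed.

Lemma rsum_le n f g : (forall j, (j < n)%nat -> f j <= g j) -> rsum n f <= rsum n g.
Proof.
  induction n; simpl; intros H; [lra|].
  specialize (IHn (fun j Hj => H j ltac:(lia))). specialize (H n ltac:(lia)). lra.
Qed.

Lemma rsum_abs n f : Rabs (rsum n f) <= rsum n (fun j => Rabs (f j)).
Proof.
  induction n; simpl. rewrite Rabs_R0; lra.
  eapply Rle_trans; [apply Rabs_triang|]. lra.
Qed.

Lemma rsum_nonneg n f : (forall j, (j < n)%nat -> 0 <= f j) -> 0 <= rsum n f.
Proof. intros H. rewrite <- (rsum_zero n). apply rsum_le. auto. Qed.

Lemma single_le_rsum n f m : (forall j, (j < n)%nat -> 0 <= f j) -> (m < n)%nat -> f m <= rsum n f.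
Proof.
  intros H Hm. rewrite (rsum_change n f (fun j => if Nat.eqb j m then 0 else f j) m Hm).
  - rewrite Nat.eqb_refl.
    assert (0 <= rsum n (fun j => if Nat.eqb j m then 0 else f j)); [|lra].
    apply rsum_nonneg. intros j Hj. destruct Nat.eqb; [lra|auto].
  - intros j Hj. apply Nat.eqb_neq in Hj. rewrite Hj. auto.
Qed.

Lemma rsum_zero_each n f : (forall j, (j < n)%nat -> 0 <= f j) -> rsum n f = 0 ->
  forall j, (j < n)%nat -> f j = 0.
Proof.
  intros H0 Hs j Hj. assert (A := single_le_rsum n f j H0 Hj). assert (B := H0 j Hj). lra.
Qed.

Lemma upd_eq x m t : upd x m t m = t.
Proof. unfold upd. rewrite Nat.eqb_refl. auto. Qed.

Lemma upd_neq x m t j : j <> m -> upd x m t j = x j.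
Proof. intros H. unfold upd. apply Nat.eqb_neq in H. rewrite H. auto. Qed.

Lemma upd_same x m : upd x m (x m) = x.
Proof. extensionality j. unfold upd. destruct (Nat.eqb_spec j m); subst; auto. Qed.

Lemma upd_upd x m t s : upd (upd x m t) m s = upd x m s.
Proof. extensionality j. unfold upd. destruct (Nat.eqb j m); auto. Qed.

(** * Polynomials in d variables *)

Lemma eval_app l1 l2 x : eval_terms (l1 ++ l2) x = eval_terms l1 x + eval_terms l2 x.
Proof. induction l1; simpl; [lra|]. rewrite IHl1. lra. Qed.

Lemma poly_ext d k f g : is_poly d k f -> (forall x, f x = g x) -> is_poly d k g.
Proof. intros [l [Hl Hf]] H. exists l. split; auto. intros x. rewrite <- H. auto. Qed.

Lemma poly_mono d k k' f : (k <= k')%nat -> is_poly d k f -> is_poly d k' f.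
Proof.
  intros Hk [l [Hl Hf]]. exists l. split; auto.
  eapply Forall_impl; [|exact Hl]. simpl. intros a [? ?]; split; auto; lia.
Qed.

Lemma poly_zero d k : is_poly d k (fun _ => 0).
Proof. exists nil. split; auto. Qed.

Lemma mono_from_zeros n i x : mono_from (repeat 0%nat n) i x = 1.
Proof. revert i; induction n; intros i; simpl; auto. rewrite IHn. lra. Qed.

Lemma list_sum_repeat0 n : list_sum (repeat 0%nat n) = 0%nat.
Proof. induction n; simpl; auto. Qed.

Lemma poly_const d c : is_poly d 0 (fun _ => c).
Proof.
  exists ((c, repeat 0%nat d) :: nil). split.
  - constructor; auto. simpl. rewrite repeat_length, list_sum_repeat0. auto.
  - intros x. simpl. unfold mono. rewrite mono_from_zeros. lra.
Qed.

Lemma poly_add d k f g : is_poly d k f -> is_poly d k g -> is_poly d k (fun x => f x + g x).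
Proof.
  intros [l1 [H1 F1]] [l2 [H2 F2]]. exists (l1 ++ l2). split.
  - apply Forall_app; auto.
  - intros x. rewrite eval_app, F1, F2. auto.
Qed.

Lemma poly_scal d k c f : is_poly d k f -> is_poly d k (fun x => c * f x).
Proof.
  intros [l [H F]]. exists (map (fun p => (c * fst p, snd p)) l). split.
  - apply Forall_map. eapply Forall_impl; [|exact H]. simpl. auto.
  - intros x. rewrite F. clear. induction l; simpl; [lra|]. rewrite <- IHl. ring.
Qed.

Lemma poly_rsum d k n (f : nat -> (nat -> R) -> R) :
  (forall j, (j < n)%nat -> is_poly d k (f j)) -> is_poly d k (fun x => rsum n (fun j => f j x)).
Proof.
  induction n; intros H; simpl. apply poly_zero.
  apply poly_add. apply IHn; auto. apply H; lia.
Qed.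

Fixpoint zipadd (a b : list nat) : list nat :=
  match a, b with
  | x :: a', y :: b' => (x + y)%nat :: zipadd a' b'
  | _, _ => nil
  end.

Lemma zipadd_len a b : length a = length b -> length (zipadd a b) = length a.
Proof. revert b; induction a; intros [|y b] H; simpl in *; auto; lia. Qed.

Lemma zipadd_sum a b : length a = length b ->
  list_sum (zipadd a b) = (list_sum a + list_sum b)%nat.
Proof. revert b; induction a; intros [|y b] H; simpl in *; try lia. rewrite IHa by lia. lia. Qed.

Lemma zipadd_mono a b i x : length a = length b ->
  mono_from (zipadd a b) i x = mono_from a i x * mono_from b i x.
Proof.
  revert b i; induction a; intros [|y b] i H; simpl in *; try lia; try lra.
  rewrite IHa by lia. rewrite pow_add. lra.
Qed.

Definition terms_mul (l1 l2 : list (R * list nat)%type) : list (R * list nat)%type :=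
  flat_map (fun p => map (fun q => (fst p * fst q, zipadd (snd p) (snd q))) l2) l1.

Lemma eval_terms_mul d l1 l2 x :
  List.Forall (fun p => length (snd p) = d) l1 -> List.Forall (fun p => length (snd p) = d) l2 ->
  eval_terms (terms_mul l1 l2) x = eval_terms l1 x * eval_terms l2 x.
Proof.
  intros H1 H2. induction l1 as [|p l1 IH]; simpl; [lra|].
  inversion H1; subst. rewrite eval_app, IH by auto.
  assert (E : eval_terms (map (fun q => (fst p * fst q, zipadd (snd p) (snd q))) l2) x
     = fst p * mono (snd p) x * eval_terms l2 x).
  { clear IH H1 H4. induction l2 as [|q l2 IH2]; simpl; [lra|]. inversion H2; subst.
    rewrite IH2 by auto. unfold mono. rewrite zipadd_mono by congruence. lra. }
  rewrite E. lra.
Qed.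

Lemma poly_mul d a b f g : is_poly d a f -> is_poly d b g -> is_poly d (a + b) (fun x => f x * g x).
Proof.
  intros [l1 [H1 F1]] [l2 [H2 F2]]. exists (terms_mul l1 l2). split.
  - unfold terms_mul. apply Forall_flat_map. eapply Forall_impl; [|exact H1]. intros p [Hp1 Hp2].
    apply Forall_map. eapply Forall_impl; [|exact H2]. intros q [Hq1 Hq2]. simpl.
    rewrite zipadd_len, zipadd_sum by congruence. split; lia.
  - intros x. rewrite F1, F2. symmetry. apply eval_terms_mul with d.
    + eapply Forall_impl; [|exact H1]. simpl. tauto.
    + eapply Forall_impl; [|exact H2]. simpl. tauto.
Qed.

Lemma poly_pow d f n : is_poly d 1 f -> is_poly d n (fun x => f x ^ n).
Proof.
  intros H. induction n.
  - apply poly_ext with (fun _ => 1). apply poly_const. intros; simpl; auto.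
  - apply poly_ext with (fun x => f x * f x ^ n). apply (poly_mul d 1 n); auto.
    intros; simpl; auto.
Qed.

Lemma mono_from_app0 j l i x : mono_from (repeat 0%nat j ++ l) i x = mono_from l (i + j) x.
Proof.
  revert i; induction j; intros i; simpl. rewrite Nat.add_0_r; auto.
  rewrite IHj, Nat.add_succ_r. simpl. ring.
Qed.

Lemma poly_coord d j : (j < d)%nat -> is_poly d 1 (fun x => x j).
Proof.
  intros Hj. exists ((1, repeat 0%nat j ++ 1%nat :: repeat 0%nat (d - j - 1)) :: nil). split.
  - constructor; auto. simpl. rewrite length_app, list_sum_app. simpl.
    rewrite !repeat_length, !list_sum_repeat0. split; lia.
  - intros x. simpl. unfold mono. rewrite mono_from_app0. simpl. rewrite mono_from_zeros. lra.
Qed.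

Lemma poly_comp d e k f (phi : nat -> (nat -> R) -> R) :
  is_poly d k f -> (forall j, (j < d)%nat -> is_poly e 1 (phi j)) ->
  is_poly e k (fun y => f (fun j => phi j y)).
Proof.
  intros [l [Hl F]] Hphi.
  assert (Mono : forall a i, (i + length a = d)%nat ->
            is_poly e (list_sum a) (fun y => mono_from a i (fun j => phi j y))).
  { induction a as [|ai a IH]; intros i Hi; simpl.
    - apply poly_const.
    - simpl in Hi. apply (poly_mul e ai (list_sum a)).
      + apply poly_pow. apply Hphi. lia.
      + apply IH. lia. }
  apply poly_ext with (fun y => eval_terms l (fun j => phi j y)); [|intros; rewrite F; auto].
  clear F. induction l as [|p l IH]; simpl. apply poly_zero.
  inversion Hl; subst. destruct H1 as [Hlen Hsum].
  apply poly_add; [|apply IH; auto].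
  apply poly_scal. apply poly_mono with (list_sum (snd p)); auto.
  apply Mono. lia.
Qed.

Lemma mono_from_ext a i x y : (forall j, (i <= j < i + length a)%nat -> x j = y j) ->
  mono_from a i x = mono_from a i y.
Proof.
  revert i; induction a; intros i H; simpl; auto. simpl in H.
  rewrite H by lia. rewrite (IHa (S i)) by (intros; apply H; lia). auto.
Qed.

Lemma poly_local d k f x y : is_poly d k f -> (forall j, (j < d)%nat -> x j = y j) -> f x = f y.
Proof.
  intros [l [Hl F]] H. rewrite !F. clear F. induction l as [|p l IH]; simpl; auto.
  inversion Hl; subst. rewrite IH by auto. unfold mono. rewrite (mono_from_ext _ 0 x y); auto.
  intros j Hj. apply H. destruct H2. lia.
Qed.

Lemma prev_poly d k v : is_poly_prev d k v -> exists k', is_poly d k' v.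
Proof.
  destruct k; simpl; intros H.
  - exists 0%nat. apply poly_ext with (fun _ => 0). apply poly_zero. intros; auto.
  - exists k; auto.
Qed.

(* Division by one coordinate: G(z) = G(z with z_s := 0) + z_s * W(z) with W of
   degree one less (W = 0 when G is constant). *)
Fixpoint decs (s : nat) (a : list nat) : list nat :=
  match a, s with
  | x :: a', O => pred x :: a'
  | x :: a', S s' => x :: decs s' a'
  | nil, _ => nil
  end.

Lemma decs_len s a : length (decs s a) = length a.
Proof. revert s; induction a; intros [|s]; simpl; auto. Qed.

Lemma decs_sum s a : (0 < nth s a 0%nat)%nat -> list_sum (decs s a) = (list_sum a - 1)%nat.
Proof.
  revert s; induction a; intros [|s] H; simpl in *; try lia.
  rewrite IHa by auto. assert (list_sum a0 >= 1)%nat.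
  { clear IHa. revert s H; induction a0; intros [|s] H; simpl in *; try lia. apply IHa0 in H. lia. }
  lia.
Qed.

Lemma decs_mono s a i z : (0 < nth s a 0%nat)%nat ->
  mono_from a i z = z (i + s)%nat * mono_from (decs s a) i z.
Proof.
  revert s i; induction a; intros [|s] i H; simpl in *; try lia.
  - rewrite Nat.add_0_r. destruct a; [lia|]. simpl. ring.
  - rewrite (IHa s (S i) H). rewrite Nat.add_succ_r. simpl. ring.
Qed.

Lemma mono_upd0 s a i z : nth s a 0%nat = 0%nat ->
  mono_from a i z = mono_from a i (upd z (i + s) 0).
Proof.
  revert s i; induction a; intros [|s] i H; simpl in *; auto.
  - subst. simpl. f_equal. apply mono_from_ext. intros j Hj. rewrite upd_neq by lia. auto.
  - rewrite upd_neq by lia. rewrite (IHa s (S i) H). rewrite Nat.add_succ_r. auto.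
Qed.

Definition terms_div (s : nat) (l : list (R * list nat)%type) : list (R * list nat)%type :=
  flat_map (fun p => if Nat.eqb (nth s (snd p) 0%nat) 0 then nil
                     else (fst p, decs s (snd p)) :: nil) l.

Lemma eval_terms_div s l z :
  eval_terms l z = eval_terms l (upd z s 0) + z s * eval_terms (terms_div s l) z.
Proof.
  induction l as [|p l IH]; simpl; [lra|]. rewrite eval_app, IH.
  unfold mono. destruct (Nat.eqb_spec (nth s (snd p) 0%nat) 0) as [E|E]; simpl.
  - assert (A := mono_upd0 s (snd p) 0 z E); simpl in A; rewrite <- A. ring.
  - assert (A := decs_mono s (snd p) 0 (upd z s 0) ltac:(lia)); simpl in A.
    rewrite A, upd_eq.
    assert (B := decs_mono s (snd p) 0 z ltac:(lia)); simpl in B; rewrite B. unfold mono. ring.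
Qed.

Lemma nth_sum0 a s : list_sum a = 0%nat -> nth s a 0%nat = 0%nat.
Proof. revert s; induction a; intros [|s] H; simpl in *; auto; try lia. apply IHa. lia. Qed.

Lemma poly_split n k G s :
  is_poly n k G ->
  exists W, is_poly_prev n k W /\ forall z, G z = G (upd z s 0) + z s * W z.
Proof.
  intros [l [Hl F]]. exists (eval_terms (terms_div s l)). split.
  - destruct k; simpl.
    + intros z. replace (terms_div s l) with (@nil (R * list nat)%type); auto.
      clear F. induction l as [|p l IH]; simpl; auto. inversion Hl; subst.
      rewrite nth_sum0 by (destruct H1; lia). simpl. auto.
    + exists (terms_div s l). split; auto. unfold terms_div. apply Forall_flat_map.
      eapply Forall_impl; [|exact Hl]. intros p [H1 H2].
      destruct (Nat.eqb_spec (nth s (snd p) 0%nat) 0); auto. constructor; auto. simpl.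
      rewrite decs_len, decs_sum by lia. split; lia.
  - intros z. rewrite !F. apply eval_terms_div.
Qed.

Definition aff (c0 : R) (c : nat -> R) (d : nat) (x : nat -> R) : R :=
  c0 + rsum d (fun j => c j * x j).

Lemma poly_aff e d c0 c : (d <= e)%nat -> is_poly e 1 (fun z => aff c0 c d z).
Proof.
  intros Hd. unfold aff. apply poly_add.
  - apply poly_mono with 0%nat; [lia|]. apply poly_const.
  - apply poly_rsum. intros j Hj. apply poly_scal. apply poly_coord. lia.
Qed.

Lemma aff_local c0 c d x y : (forall j, (j < d)%nat -> x j = y j) -> aff c0 c d x = aff c0 c d y.
Proof. intros H. unfold aff. f_equal. apply rsum_ext. intros j Hj. rewrite H; auto. Qed.

(* It is obtained by
   dividing u(y - ell(y) e + t e), a polynomial in (y, t), by the variable t. *)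
Lemma taylor_division d k u (c0 : R) (c : nat -> R) (e : nat -> R) : is_poly d k u ->
  exists w, is_poly_prev d k w /\
    forall x, u x = u (fun j => x j - aff c0 c d x * e j) + aff c0 c d x * w x.
Proof.
  intros Hu.
  set (shift := fun j (z : nat -> R) => z j - aff c0 c d z * e j + z d * e j).
  assert (HG : is_poly (S d) k (fun z => u (fun j => shift j z))).
  { apply poly_comp with d; auto. intros j Hj. unfold shift. apply poly_add. apply poly_add.
    - apply poly_coord. lia.
    - apply poly_ext with (fun z => (- e j) * aff c0 c d z). apply poly_scal. apply poly_aff. lia.
      intros; ring.
    - apply poly_ext with (fun z => e j * z d). apply poly_scal. apply poly_coord. lia.
      intros; ring. }
  destruct (poly_split (S d) k _ d HG) as [W [HW EW]].
  assert (Aupd : forall x t, aff c0 c d (upd x d t) = aff c0 c d x).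
  { intros x t. apply aff_local. intros j Hj. rewrite upd_neq by lia. auto. }
  exists (fun x => W (upd x d (aff c0 c d x))). split.
  - destruct k as [|j]; simpl in *; [intros x; apply HW|].
    apply poly_ext with (fun x => W (fun m => if (m <? d)%nat then x m else aff c0 c d x)).
    + apply poly_comp with (S d); auto. intros m Hm. destruct (Nat.ltb_spec m d).
      * apply poly_coord; auto.
      * apply poly_aff; lia.
    + intros x. apply poly_local with (S d) j; auto. intros m Hm. unfold upd.
      destruct (Nat.ltb_spec m d); destruct (Nat.eqb_spec m d); auto; lia.
  - intros x. specialize (EW (upd x d (aff c0 c d x))).
    rewrite upd_eq, upd_upd in EW.
    assert (E1 : u (fun j => shift j (upd x d (aff c0 c d x))) = u x).
    { apply poly_local with d k; auto. intros j Hj. unfold shift. rewrite Aupd, upd_eq, upd_neq by lia. ring. }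
    assert (E2 : u (fun j => shift j (upd x d 0)) = u (fun j => x j - aff c0 c d x * e j)).
    { apply poly_local with d k; auto. intros j Hj. unfold shift. rewrite Aupd, upd_eq, upd_neq by lia. ring. }
    rewrite E1, E2 in EW. exact EW.
Qed.

(* Univariate polynomials of degree <= k, in Horner form. *)
Fixpoint UP (k : nat) (f : R -> R) : Prop :=
  match k with
  | O => forall t, f t = f 0
  | S k => exists c g, UP k g /\ forall t, f t = c + t * g t
  end.

Lemma UP_ext k f g : UP k f -> (forall t, f t = g t) -> UP k g.
Proof.
  destruct k; simpl; intros H E.
  - intros t. rewrite <- !E. auto.
  - destruct H as [c [h [Hh F]]]. exists c, h. split; auto. intros t; rewrite <- E; auto.
Qed.

Lemma UP_const k c : UP k (fun _ => c).
Proof.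
  revert c; induction k; intros c; simpl; auto.
  exists c, (fun _ => 0). split. apply IHk. intros; ring.
Qed.

Lemma UP_S k f : UP k f -> UP (S k) f.
Proof.
  revert f; induction k; intros f H.
  - exists (f 0), (fun _ => 0). split. simpl; auto. intros t; rewrite H; lra.
  - destruct H as [c [g [Hg F]]]. exists c, g. split; auto.
Qed.

Lemma UP_le k k' f : (k <= k')%nat -> UP k f -> UP k' f.
Proof. induction 1; auto. intros; apply UP_S; auto. Qed.

Lemma UP_add k f g : UP k f -> UP k g -> UP k (fun t => f t + g t).
Proof.
  revert f g; induction k; intros f g Hf Hg; simpl in *.
  - intros t; rewrite Hf, Hg; auto.
  - destruct Hf as [c [f' [Hf' F]]], Hg as [c' [g' [Hg' G]]].
    exists (c + c'), (fun t => f' t + g' t). split; auto. intros t; rewrite F, G; lra.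
Qed.

Lemma UP_scal k c f : UP k f -> UP k (fun t => c * f t).
Proof.
  revert f; induction k; intros f Hf; simpl in *.
  - intros t; rewrite Hf; auto.
  - destruct Hf as [c0 [f' [Hf' F]]]. exists (c * c0), (fun t => c * f' t). split; auto.
    intros t; rewrite F; lra.
Qed.

Lemma UP_mul a b f g : UP a f -> UP b g -> UP (a + b) (fun t => f t * g t).
Proof.
  revert f; induction a; intros f Hf Hg; simpl in *.
  - apply UP_ext with (fun t => f 0 * g t). apply UP_scal; auto. intros t; rewrite (Hf t); auto.
  - destruct Hf as [c [f' [Hf' F]]]. change (UP (S (a + b)) (fun t => f t * g t)).
    apply UP_ext with (fun t => c * g t + t * (f' t * g t)).
    + apply UP_add. apply UP_le with b; [lia|]. apply UP_scal; auto.
      exists 0, (fun t => f' t * g t). split. apply IHa; auto. intros; lra.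
    + intros t; rewrite F; lra.
Qed.

Lemma UP_pow n : UP n (fun t => t ^ n).
Proof.
  induction n. apply UP_ext with (fun _ => 1). apply UP_const. intros; simpl; auto.
  apply UP_ext with (fun t => t * t ^ n); [|intros; simpl; auto].
  apply (UP_mul 1 n); auto. exists 0, (fun _ => 1). split. simpl; auto. intros; lra.
Qed.

Lemma UP_div k f : UP (S k) f -> forall a, exists g, UP k g /\ forall t, f t = f a + (t - a) * g t.
Proof.
  revert f; induction k; intros f Hf a.
  - destruct Hf as [c [g [Hg F]]]. exists g. split; auto. intros t. rewrite !F, (Hg t), (Hg a). lra.
  - destruct Hf as [c [g [Hg F]]]. destruct (IHk g Hg a) as [h [Hh G]].
    exists (fun t => g a + t * h t). split.
    + exists (g a), h. split; auto.
    + intros t. rewrite !F, (G t). lra.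
Qed.

Lemma UP_zero k : forall f a b, UP k f -> a < b -> (forall t, a <= t <= b -> f t = 0) ->
  forall t, f t = 0.
Proof.
  induction k; intros f a b Hf Hab H t.
  - simpl in Hf. rewrite Hf, <- (Hf a). apply H. lra.
  - destruct (UP_div k f Hf a) as [g [Hg G]].
    assert (Hg0 : forall t, g t = 0).
    { apply IHk with ((a + b) / 2) b; auto. lra. intros s Hs.
      assert (E := G s). rewrite (H a), H in E by lra.
      assert (E2 : (s - a) * g s = 0) by lra.
      apply Rmult_integral in E2. destruct E2 as [E2|E2]; lra. }
    rewrite G, Hg0, H by lra. lra.
Qed.

Lemma poly_UP d k f x j : is_poly d k f -> UP k (fun t => f (upd x j t)).
Proof.
  intros [l [Hl F]]. apply UP_ext with (fun t => eval_terms l (upd x j t)); [|intros; rewrite F; auto].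
  assert (Mono : forall a i, UP (list_sum a) (fun t => mono_from a i (upd x j t))).
  { induction a as [|ai a IH]; intros i; simpl; [intros; auto|].
    apply (UP_mul ai (list_sum a)); [|apply IH].
    destruct (Nat.eq_dec i j) as [->|Hne].
    - apply UP_ext with (fun t => t ^ ai). apply UP_pow. intros; rewrite upd_eq; auto.
    - apply UP_ext with (fun _ => x i ^ ai). apply UP_const. intros; rewrite upd_neq; auto. }
  clear F. induction l as [|p l IH]; simpl. apply UP_const. inversion Hl; subst. destruct H1.
  apply UP_add; [|apply IH; auto]. apply UP_scal. apply UP_le with (list_sum (snd p)); auto.
  apply Mono.
Qed.

(* Identity theorem: a polynomial vanishing on a box vanishes everywhere
   (apply the univariate version one coordinate at a time). *)
Lemma poly_box_zero d k f (p : nat -> R) r : is_poly d k f -> 0 < r ->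
  (forall x, (forall j, (j < d)%nat -> Rabs (x j - p j) <= r) -> f x = 0) ->
  forall x, f x = 0.
Proof.
  intros Hf Hr H0.
  assert (P : forall n x, (forall j, (n <= j < d)%nat -> Rabs (x j - p j) <= r) -> f x = 0).
  { induction n; intros x Hx.
    - apply H0. intros j Hj. apply Hx. lia.
    - rewrite <- (upd_same x n).
      apply (UP_zero k (fun t => f (upd x n t)) (p n - r) (p n + r));
        [apply poly_UP with d; auto|lra|].
      intros t Ht. apply IHn. intros j Hj.
      destruct (Nat.eq_dec j n) as [->|Hne].
      + rewrite upd_eq. apply Rabs_le. lra.
      + rewrite upd_neq by auto. apply Hx. lia. }
  intros x. apply (P d). intros; lia.
Qed.

(** * Barycentric coordinates of the simplex *)

Definition barycentric d (V : nat -> nat -> R) (c0 : nat -> R) (c : nat -> nat -> R) : Prop :=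
  (forall l m, (l <= d)%nat -> (m <= d)%nat ->
     aff (c0 l) (c l) d (V m) = if Nat.eqb l m then 1 else 0) /\
  (forall x, rsum (S d) (fun l => aff (c0 l) (c l) d x) = 1) /\
  (forall x j, (j < d)%nat -> rsum (S d) (fun l => aff (c0 l) (c l) d x * V l j) = x j).

(* Nondegeneracy makes the (d+1) x (d+1) matrix A with rows (1, V_m)
   invertible; the columns of its inverse give the barycentric coordinates. *)
Module BarycentricCoordinates.
Import all_boot all_algebra Rstruct GRing.Theory.
Local Open Scope ring_scope.

Lemma rsum_big n (f : nat -> R) : rsum n f = \sum_(i < n) f i.
Proof.
elim: n => [|n IH] /=; first by rewrite big_ord0.
by rewrite big_ord_recr /= IH RplusE.
Qed.

Definition hom_row (d : nat) (x : nat -> R) : 'rV[R]_(d.+1) :=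
  \row_(i < d.+1) (if (i : nat) == 0%N then 1 else x (i.-1)).
Definition vertex_matrix (d : nat) (V : nat -> nat -> R) : 'M[R]_(d.+1) :=
  \matrix_(m < d.+1) hom_row d (V m).

(* Nondegeneracy says exactly that no nonzero row vector annihilates it. *)
Lemma vertex_matrix_unit (d : nat) (V : nat -> nat -> R) : Defs.nondegenerate d V ->
  vertex_matrix d V \in unitmx.
Proof.
move=> nd; rewrite -row_free_unit; apply: inj_row_free => v vA.
pose lam (m : nat) : R := if (m < d.+1)%N then v 0 (inord m) else 0.
have key (i : 'I_d.+1) :
    \sum_(m < d.+1) lam m * (if (i : nat) == 0%N then 1 else V m i.-1) = 0.
  have := congr1 (fun M : 'M[R]_(1, d.+1) => M 0 i) vA; rewrite !mxE => e.
  rewrite -[X in _ = X]e; apply: eq_bigr => m _; rewrite /lam ltn_ord inord_val !mxE //.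
have sum0 : rsum (S d) lam = 0.
  rewrite rsum_big -[X in _ = X](key ord0); apply: eq_bigr => m _; by rewrite mulr1.
have mom0 j : Peano.lt j d -> rsum (S d) (fun i => (lam i * V i j)%R) = 0.
  move=> /ltP jd; have := key (inord j.+1); rewrite inordK ?ltnS // => e.
  by rewrite rsum_big -[X in _ = X]e.
apply/matrixP => i m; rewrite (ord1 i) mxE.
have := nd lam sum0 mom0 m; rewrite /lam ltn_ord inord_val; apply.
by apply/leP; rewrite -ltnS.
Qed.

(* lambda(x) = (1, x) A^-1 are the barycentric coordinates. *)
Lemma existence (d : nat) (V : nat -> nat -> R) : Defs.nondegenerate d V ->
  exists (c0 : nat -> R) (c : nat -> nat -> R), barycentric d V c0 c.
Proof.
move=> /vertex_matrix_unit uA; set A := vertex_matrix d V in uA.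
pose B := invmx A.
pose lamx (x : nat -> R) : 'rV[R]_(d.+1) := hom_row d x *m B.
have lamxA x : lamx x *m A = hom_row d x by rewrite /lamx -mulmxA mulVmx // mulmx1.
exists (fun l => B 0 (inord l)), (fun l j => B (inord j.+1) (inord l)).
have affE l x :
    aff (B 0 (inord l)) (fun j => B (inord j.+1) (inord l)) d x = lamx x 0 (inord l).
  rewrite /aff /lamx mxE big_ord_recl !mxE /= mul1r RplusE rsum_big.
  congr (_ + _); apply: eq_bigr => i _; rewrite !mxE /= RmultE mulrC; congr (_ * _).
  by congr (B _ _); apply: val_inj; rewrite /= inordK // ltnS.
split; [|split].
- move=> l m /leP ld /leP md; rewrite affE.
  have -> : V m = V (inord m : 'I_d.+1) by rewrite inordK.
  have rowA : hom_row d (V (inord m : 'I_d.+1)) = row (inord m) A by rewrite rowK.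
  rewrite /lamx rowA -row_mul mulmxV // !mxE.
  rewrite -(inj_eq val_inj) /= !inordK ?ltnS //.
  by case: (Nat.eqb_spec l m) => [->|/eqP]; rewrite ?eqxx // eq_sym => /negbTE ->.
- move=> x; rewrite rsum_big R1E.
  have := congr1 (fun M : 'M[R]_(1, d.+1) => M 0 ord0) (lamxA x).
  rewrite !mxE /= => <-.
  by apply: eq_bigr => l _; rewrite affE !mxE inord_val mulr1.
- move=> x j /ltP jd; rewrite rsum_big.
  transitivity ((lamx x *m A) 0 (inord j.+1)); last by rewrite lamxA !mxE inordK.
  by rewrite mxE; apply: eq_bigr => l _; rewrite affE !mxE inord_val inordK.
Qed.

End BarycentricCoordinates.

Section Simplex.
Variables (d : nat) (V : nat -> nat -> R) (c0 : nat -> R) (c : nat -> nat -> R).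
Hypothesis Hbary : barycentric d V c0 c.

Lemma aff_comb a0 a n (mu : nat -> R) : rsum n mu = 1 ->
  aff a0 a d (fun j => rsum n (fun m => mu m * V m j)) = rsum n (fun m => mu m * aff a0 a d (V m)).
Proof.
  intros Hs. unfold aff.
  rewrite (rsum_ext n _ (fun m => mu m * a0 + rsum d (fun j => mu m * (a j * V m j))))
    by (intros; rewrite rsum_scal; ring).
  rewrite rsum_plus, (rsum_ext n (fun m => mu m * a0) (fun m => a0 * mu m)) by (intros; ring).
  rewrite rsum_scal, Hs, rsum_swap. f_equal; [ring|].
  apply rsum_ext. intros j Hj. rewrite <- rsum_scal. apply rsum_ext. intros; ring.
Qed.

Lemma aff_diff a0 (a : nat -> R) x y :
  rsum d (fun j => a j * (x j - y j)) = aff a0 a d x - aff a0 a d y.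
Proof.
  unfold aff. rewrite (rsum_ext d _ (fun j => a j * x j - a j * y j)) by (intros; ring).
  rewrite rsum_minus. ring.
Qed.

Lemma bary_vertex l m : (l <= d)%nat -> (m <= d)%nat ->
  aff (c0 l) (c l) d (V m) = if Nat.eqb l m then 1 else 0.
Proof. apply Hbary. Qed.

Lemma bary_nonneg x : in_simplex d V x -> forall l, (l <= d)%nat -> 0 <= aff (c0 l) (c l) d x.
Proof.
  intros [mu [Hmu [Hs Hx]]] l Hl.
  rewrite (aff_local _ _ d x (fun j => rsum (S d) (fun m => mu m * V m j))) by auto.
  rewrite aff_comb by auto.
  rewrite (rsum_ext (S d) _ (fun m => mu m * (if Nat.eqb l m then 1 else 0)))
    by (intros m Hm; rewrite bary_vertex by lia; auto).
  rewrite rsum_delta by lia. apply Hmu; auto.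
Qed.

Lemma simplex_of_bary x :
  (forall l, (l <= d)%nat -> 0 <= aff (c0 l) (c l) d x) -> in_simplex d V x.
Proof.
  destruct Hbary as [_ [B2 B3]]. intros Hpos.
  exists (fun l => aff (c0 l) (c l) d x). repeat split; auto.
  intros j Hj. rewrite B3; auto.
Qed.

Lemma face_of_bary i x : (i <= d)%nat ->
  (forall l, (l <= d)%nat -> 0 <= aff (c0 l) (c l) d x) -> aff (c0 i) (c i) d x = 0 ->
  in_face d V i x.
Proof.
  destruct Hbary as [_ [B2 B3]]. intros Hi Hpos Hzero.
  exists (fun l => aff (c0 l) (c l) d x). repeat split; auto.
  intros j Hj. rewrite B3; auto.
Qed.

Lemma slide_to_face i o x : (i <= d)%nat -> (o <= d)%nat -> o <> i -> in_simplex d V x ->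
  in_face d V i (fun j => x j - aff (c0 i) (c i) d x * (V i j - V o j)).
Proof.
  intros Hi Ho Hoi Hx. set (s := aff (c0 i) (c i) d x).
  assert (Shift : forall l, (l <= d)%nat ->
     aff (c0 l) (c l) d (fun j => x j - s * (V i j - V o j))
     = aff (c0 l) (c l) d x - s * ((if Nat.eqb l i then 1 else 0) - (if Nat.eqb l o then 1 else 0))).
  { intros l Hl. rewrite <- !bary_vertex by auto. unfold aff.
    rewrite (rsum_ext d _ (fun j => c l j * x j - s * (c l j * V i j) + s * (c l j * V o j)))
      by (intros; ring).
    rewrite rsum_plus, rsum_minus, !rsum_scal. ring. }
  apply face_of_bary; auto.
  - intros l Hl. rewrite Shift by auto.
    assert (Pl := bary_nonneg x Hx l Hl). assert (Pi := bary_nonneg x Hx i Hi).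
    destruct (Nat.eqb_spec l i); destruct (Nat.eqb_spec l o); subst; unfold s; lia || lra.
  - rewrite Shift, Nat.eqb_refl by auto.
    replace (Nat.eqb i o) with false by (symmetry; apply Nat.eqb_neq; auto). unfold s. ring.
Qed.

Lemma simplex_bound x : in_simplex d V x -> forall j, (j < d)%nat -> Rabs (x j) < Defs.bound d V.
Proof.
  intros [mu [Hmu [Hs Hx]]] j Hj. rewrite Hx by auto. unfold Defs.bound.
  eapply Rle_lt_trans. apply rsum_abs.
  apply Rle_lt_trans with (rsum (S d) (fun i => rsum d (fun j => Rabs (V i j)))); [|lra].
  apply rsum_le. intros i Hi. rewrite Rabs_mult.
  assert (mu i <= 1) by (rewrite <- Hs; apply single_le_rsum; auto; intros; apply Hmu; lia).
  rewrite Rabs_right by (apply Rle_ge; apply Hmu; lia).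
  apply Rle_trans with (Rabs (V i j)).
  - assert (0 <= Rabs (V i j)) by apply Rabs_pos. assert (0 <= mu i) by (apply Hmu; lia). nra.
  - apply (single_le_rsum d (fun j => Rabs (V i j))); auto. intros; apply Rabs_pos.
Qed.

(* K has interior: a box around the barycenter on which every lambda_l > 0. *)
Lemma interior_box : exists xb rho, 0 < rho /\
  forall y, (forall j, (j < d)%nat -> Rabs (y j - xb j) <= 2 * rho) ->
    forall l, (l <= d)%nat -> 0 < aff (c0 l) (c l) d y.
Proof.
  remember (INR (S d)) as n eqn:En. assert (Hn : 0 < n) by (rewrite En; apply lt_0_INR; lia).
  set (xb := fun j => rsum (S d) (fun m => / n * V m j)).
  set (Sc := rsum (S d) (fun l => rsum d (fun j => Rabs (c l j)))).
  assert (HSc : 0 <= Sc) by (apply rsum_nonneg; intros; apply rsum_nonneg; intros; apply Rabs_pos).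
  set (rho := 1 / (4 * n * (Sc + 1))).
  assert (Hrho : 0 < rho) by (apply Rdiv_lt_0_compat; [lra|]; apply Rmult_lt_0_compat; lra).
  exists xb, rho. split; auto. intros y Hy l Hl.
  assert (Hxb : aff (c0 l) (c l) d xb = / n).
  { unfold xb. rewrite aff_comb.
    - rewrite (rsum_ext (S d) _ (fun m => / n * (if Nat.eqb l m then 1 else 0)))
        by (intros; rewrite bary_vertex by lia; auto).
      apply rsum_delta. lia.
    - rewrite rsum_const, <- En. field. lra. }
  assert (Hdev : Rabs (aff (c0 l) (c l) d y - aff (c0 l) (c l) d xb) <= Sc * (2 * rho)).
  { rewrite <- (aff_diff (c0 l)). eapply Rle_trans. apply rsum_abs.
    apply Rle_trans with (rsum d (fun j => (2 * rho) * Rabs (c l j))).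
    - apply rsum_le. intros j Hj. rewrite Rabs_mult, Rmult_comm.
      apply Rmult_le_compat_r. apply Rabs_pos. apply Hy; auto.
    - rewrite rsum_scal, Rmult_comm. apply Rmult_le_compat_r; [lra|].
      apply (single_le_rsum (S d) (fun l => rsum d (fun j => Rabs (c l j)))); [|lia].
      intros; apply rsum_nonneg; intros; apply Rabs_pos. }
  assert (E : Sc * (2 * rho) < / n).
  { unfold rho. apply Rmult_lt_reg_r with (4 * n * (Sc + 1)). apply Rmult_lt_0_compat; lra.
    field_simplify; try lra; try nra. }
  assert (G := Rle_abs (- (aff (c0 l) (c l) d y - aff (c0 l) (c l) d xb))).
  rewrite Rabs_Ropp in G. lra.
Qed.

Lemma outward_normal_of_bary l : (1 <= d)%nat -> (l <= d)%nat ->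
  0 < dot d (c l) (c l) /\
  outward_unit_normal d V l (fun j => - c l j / sqrt (dot d (c l) (c l))).
Proof.
  intros Hd Hl.
  set (o := if Nat.eqb l 0 then 1%nat else 0%nat).
  assert (Ho : (o <= d)%nat /\ o <> l) by (unfold o; destruct (Nat.eqb_spec l 0); lia).
  destruct Ho as [Ho1 Ho2].
  assert (Hne : forall j, j <> l -> Nat.eqb l j = false) by (intros; apply Nat.eqb_neq; auto).
  set (D := dot d (c l) (c l)).
  assert (HD0 : 0 <= D) by (unfold D, dot; apply rsum_nonneg; intros; nra).
  assert (HD : 0 < D).
  { destruct HD0 as [|HD0]; auto. exfalso.
    assert (Z := rsum_zero_each d (fun j => c l j * c l j) ltac:(intros; nra) (eq_sym HD0)).
    assert (E := aff_diff (c0 l) (c l) (V l) (V o)).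
    rewrite !bary_vertex, Nat.eqb_refl, Hne in E by auto.
    rewrite (rsum_ext d _ (fun _ => 0)), rsum_zero in E; [lra|].
    intros j Hj. specialize (Z j Hj). simpl in Z. assert (c l j = 0) by nra. rewrite H. ring. }
  set (s := sqrt D). assert (Hs : 0 < s) by (apply sqrt_lt_R0; auto).
  assert (Hss : s * s = D) by (apply sqrt_sqrt; lra).
  assert (Dot : forall x y, dot d (fun j => - c l j / s) (fun j => x j - y j)
                 = - / s * (aff (c0 l) (c l) d x - aff (c0 l) (c l) d y)).
  { intros x y. unfold dot. rewrite <- aff_diff, <- rsum_scal. apply rsum_ext. intros; field; lra. }
  split; auto. split; [|split].
  - unfold dot. rewrite (rsum_ext d _ (fun j => / (s * s) * (c l j * c l j))) by (intros; field; lra).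
    rewrite rsum_scal. fold (dot d (c l) (c l)). fold D. rewrite Hss. field. lra.
  - intros j l' Hj Hl' Hjl Hl'l. fold D s. rewrite Dot, !bary_vertex, !Hne by auto. ring.
  - intros j Hj Hjl. fold D s. rewrite Dot, !bary_vertex, Nat.eqb_refl, Hne by auto.
    assert (0 < / s) by (apply Rinv_0_lt_compat; auto). lra.
Qed.

End Simplex.

(** * Bounded uniformly continuous functions of the first N coordinates *)

Definition closeN (N : nat) (y z : nat -> R) (del : R) : Prop :=
  forall j, (j < N)%nat -> Rabs (y j - z j) < del.

Definition UC (N : nat) (f : (nat -> R) -> R) : Prop :=
  forall eps, 0 < eps -> exists del, 0 < del /\
    forall y z, closeN N y z del -> Rabs (f y - f z) < eps.

Definition BND (f : (nat -> R) -> R) : Prop := exists B, forall x, Rabs (f x) <= B.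

Definition BUC (N : nat) (f : (nat -> R) -> R) : Prop := BND f /\ UC N f.

Lemma closeN_weaken N y z d1 d2 : closeN N y z d1 -> d1 <= d2 -> closeN N y z d2.
Proof. intros H Hd j Hj. eapply Rlt_le_trans; [apply H; auto|auto]. Qed.

Lemma closeN_upd N y z m s del : closeN N y z del -> 0 < del ->
  closeN N (upd y m s) (upd z m s) del.
Proof.
  intros H Hd j Hj. destruct (Nat.eq_dec j m) as [->|Hne].
  - rewrite !upd_eq, Rminus_eq_0, Rabs_R0. auto.
  - rewrite !upd_neq by auto. apply H; auto.
Qed.

Lemma UC_pair N f g e1 e2 : UC N f -> UC N g -> 0 < e1 -> 0 < e2 ->
  exists del, 0 < del /\ forall y z, closeN N y z del ->
    Rabs (f y - f z) < e1 /\ Rabs (g y - g z) < e2.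
Proof.
  intros Hf Hg He1 He2. destruct (Hf e1 He1) as [d1 [Hd1 F]]. destruct (Hg e2 He2) as [d2 [Hd2 G]].
  exists (Rmin d1 d2). split. apply Rmin_pos; auto. intros y z Hc. split.
  - apply F. eapply closeN_weaken; [exact Hc|apply Rmin_l].
  - apply G. eapply closeN_weaken; [exact Hc|apply Rmin_r].
Qed.

Lemma UC_ext N f g : UC N f -> (forall x, f x = g x) -> UC N g.
Proof. intros H E. replace g with f; auto. extensionality x; auto. Qed.

Lemma UC_const N c : UC N (fun _ => c).
Proof. intros eps He. exists 1. split; [lra|]. intros. rewrite Rminus_eq_0, Rabs_R0. auto. Qed.

Lemma UC_plus N f g : UC N f -> UC N g -> UC N (fun x => f x + g x).
Proof.
  intros Hf Hg eps He. destruct (UC_pair N f g (eps/2) (eps/2) Hf Hg) as [del [Hd F]]; try lra.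
  exists del. split; auto. intros y z Hc. destruct (F y z Hc).
  replace (f y + g y - (f z + g z)) with ((f y - f z) + (g y - g z)) by ring.
  eapply Rle_lt_trans; [apply Rabs_triang|]. lra.
Qed.

Lemma UC_scal N c f : UC N f -> UC N (fun x => c * f x).
Proof.
  intros Hf eps He. assert (0 <= Rabs c) by apply Rabs_pos.
  destruct (Hf (eps / (Rabs c + 1))) as [d [Hd F]]; [apply Rdiv_lt_0_compat; lra|].
  exists d. split; auto. intros y z Hc. specialize (F y z Hc).
  replace (c * f y - c * f z) with (c * (f y - f z)) by ring. rewrite Rabs_mult.
  assert (E : eps = (Rabs c + 1) * (eps / (Rabs c + 1))) by (field; lra).
  rewrite E. assert (0 <= Rabs (f y - f z)) by apply Rabs_pos. nra.
Qed.

Lemma UC_upd N f m s : UC N f -> UC N (fun y => f (upd y m s)).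
Proof.
  intros H eps He. destruct (H eps He) as [d [Hd F]]. exists d. split; auto. intros y z Hc.
  apply F. apply closeN_upd; auto.
Qed.

Lemma UC_lin N (a : nat -> R) : UC N (fun y => rsum N (fun j => a j * y j)).
Proof.
  intros eps He. set (S := rsum N (fun j => Rabs (a j))).
  assert (HS : 0 <= S) by (apply rsum_nonneg; intros; apply Rabs_pos).
  exists (eps / (S + 1)). split. apply Rdiv_lt_0_compat; lra. intros y z Hc.
  rewrite <- rsum_minus. eapply Rle_lt_trans. apply rsum_abs.
  apply Rle_lt_trans with (rsum N (fun j => (eps / (S + 1)) * Rabs (a j))).
  - apply rsum_le. intros j Hj. replace (a j * y j - a j * z j) with (a j * (y j - z j)) by ring.
    rewrite Rabs_mult, Rmult_comm. apply Rmult_le_compat_r. apply Rabs_pos. left; apply Hc; auto.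
  - rewrite rsum_scal. fold S. apply Rlt_le_trans with (eps / (S + 1) * (S + 1)).
    + apply Rmult_lt_compat_l. apply Rdiv_lt_0_compat; lra. lra.
    + right. field. lra.
Qed.

Lemma UC_max N f g : UC N f -> UC N g -> UC N (fun x => Rmax (f x) (g x)).
Proof.
  intros Hf Hg eps He. destruct (UC_pair N f g eps eps Hf Hg He He) as [del [Hd F]].
  exists del. split; auto. intros y z Hc. destruct (F y z Hc).
  unfold Rmax, Rabs in *. repeat destruct Rle_dec; repeat destruct Rcase_abs; lra.
Qed.

Lemma UC_min N f g : UC N f -> UC N g -> UC N (fun x => Rmin (f x) (g x)).
Proof.
  intros Hf Hg eps He. destruct (UC_pair N f g eps eps Hf Hg He He) as [del [Hd F]].
  exists del. split; auto. intros y z Hc. destruct (F y z Hc).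
  unfold Rmin, Rabs in *. repeat destruct Rle_dec; repeat destruct Rcase_abs; lra.
Qed.

Lemma BND_nonneg f : BND f -> exists B, 0 <= B /\ forall x, Rabs (f x) <= B.
Proof.
  intros [B HB]. exists B. split; auto.
  eapply Rle_trans; [apply Rabs_pos|apply (HB (fun _ => 0))].
Qed.

Lemma UC_mul N f g : BUC N f -> BUC N g -> UC N (fun x => f x * g x).
Proof.
  intros [Bf Uf] [Bg Ug]. apply BND_nonneg in Bf as [A [HA0 HA]].
  apply BND_nonneg in Bg as [B [HB0 HB]].
  intros eps He. set (e1 := eps / (A + B + 1)).
  assert (He1 : 0 < e1) by (unfold e1; apply Rdiv_lt_0_compat; lra).
  destruct (UC_pair N f g e1 e1 Uf Ug He1 He1) as [del [Hd FG]].
  exists del. split; auto. intros y z Hc. destruct (FG y z Hc) as [F G].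
  replace (f y * g y - f z * g z) with (f y * (g y - g z) + g z * (f y - f z)) by ring.
  eapply Rle_lt_trans; [apply Rabs_triang|]. rewrite !Rabs_mult.
  specialize (HA y). specialize (HB z).
  assert (Rabs (f y) * Rabs (g y - g z) <= A * e1)
    by (apply Rmult_le_compat; auto; try apply Rabs_pos; lra).
  assert (Rabs (g z) * Rabs (f y - f z) <= B * e1)
    by (apply Rmult_le_compat; auto; try apply Rabs_pos; lra).
  assert (E : eps = (A + B + 1) * e1) by (unfold e1; field; lra). nra.
Qed.

Lemma BUC_const N c : BUC N (fun _ => c).
Proof. split. exists (Rabs c). intros; lra. apply UC_const. Qed.

Lemma BUC_plus N f g : BUC N f -> BUC N g -> BUC N (fun x => f x + g x).
Proof.
  intros [[A HA] Uf] [[B HB] Ug]. split; [|apply UC_plus; auto].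
  exists (A + B). intros x. eapply Rle_trans; [apply Rabs_triang|].
  specialize (HA x); specialize (HB x); lra.
Qed.

Lemma BUC_mul N f g : BUC N f -> BUC N g -> BUC N (fun x => f x * g x).
Proof.
  intros Hf Hg. split; [|apply UC_mul; auto].
  destruct Hf as [Hf _], Hg as [Hg _].
  apply BND_nonneg in Hf as [A [HA0 HA]]. apply BND_nonneg in Hg as [B [HB0 HB]].
  exists (A * B). intros x. rewrite Rabs_mult. apply Rmult_le_compat; auto; apply Rabs_pos.
Qed.

Lemma BUC_ext N f g : BUC N f -> (forall x, f x = g x) -> BUC N g.
Proof. intros H E. replace g with f; auto. extensionality x; auto. Qed.

(* Clipping every coordinate to [-M, M] makes a polynomial bounded and
   uniformly continuous, without changing it on the box (-M, M)^N. *)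
Definition clip (M : R) (x : nat -> R) : nat -> R := fun j => Rmax (- M) (Rmin M (x j)).

Lemma clip_id M v : Rabs v < M -> Rmax (- M) (Rmin M v) = v.
Proof. intros H. apply Rabs_def2 in H. unfold Rmax, Rmin. repeat destruct Rle_dec; lra. Qed.

Lemma BUC_clip N M j : (j < N)%nat -> BUC N (fun x => clip M x j).
Proof.
  intros Hj. split.
  - exists (Rabs M + 1). intros x. unfold clip, Rmax, Rmin.
    repeat destruct Rle_dec; unfold Rabs; repeat destruct Rcase_abs; lra.
  - apply UC_max; [apply UC_const|]. apply UC_min; [apply UC_const|].
    intros eps He. exists eps. split; auto.
Qed.

Lemma BUC_poly_clip d k f M : is_poly d k f -> BUC d (fun x => f (clip M x)).
Proof.
  intros [l [Hl F]]. apply BUC_ext with (fun x => eval_terms l (clip M x)); [|intros; rewrite F; auto].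
  assert (Mono : forall a i, (i + length a = d)%nat -> BUC d (fun x => mono_from a i (clip M x))).
  { induction a as [|ai a IHa]; intros i Hi; simpl. apply BUC_const. simpl in Hi.
    apply BUC_mul; [|apply IHa; lia].
    induction ai; simpl; [apply BUC_const|]. apply BUC_mul; auto. apply BUC_clip. lia. }
  clear F. induction l as [|p l IH]; simpl. apply BUC_const.
  inversion Hl; subst. destruct H1 as [Hlen _]. apply BUC_plus; [|apply IH; auto].
  apply BUC_mul. apply BUC_const. apply Mono. lia.
Qed.

Lemma UC_slice_cont N C y m : (m < N)%nat -> UC N C ->
  forall t, continuous (fun t => C (upd y m t)) t.
Proof.
  intros Hm H t. apply continuity_pt_filterlim. intros eps Heps.
  destruct (H eps Heps) as [del [Hd Hf]].
  exists del. split; auto. intros x [_ Hx]. simpl in *. unfold R_dist in *. apply Hf.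
  intros j Hj. destruct (Nat.eq_dec j m) as [->|Hne].
  - rewrite !upd_eq. auto.
  - rewrite !upd_neq by auto. rewrite Rminus_eq_0, Rabs_R0. auto.
Qed.

(** * One-dimensional Riemann integrals *)

Lemma RInt_tot_RInt f a b : ex_RInt f a b -> RInt_tot f a b = RInt f a b.
Proof.
  intros H. unfold RInt_tot. destruct excluded_middle_informative as [h|h].
  - rewrite (RInt_Reals f a b (epsilon h (fun _ => True))). auto.
  - exfalso. apply h. constructor. apply ex_RInt_Reals_0. auto.
Qed.

Lemma ex_RInt_cont (f : R -> R) p q : (forall t, continuous f t) -> ex_RInt f p q.
Proof. intros H. apply (ex_RInt_continuous (V := R_CompleteNormedModule)). intros; apply H. Qed.

Lemma RInt_piece (f g : R -> R) a b M : -M <= a -> a <= b -> b <= M ->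
  (forall t, continuous f t) ->
  (forall t, -M < t < a -> g t = 0) -> (forall t, a < t < b -> g t = f t) ->
  (forall t, b < t < M -> g t = 0) ->
  ex_RInt g (-M) M /\ RInt g (-M) M = RInt f a b.
Proof.
  intros H1 H2 H3 Hc G1 G2 G3.
  assert (E1 : ex_RInt g (-M) a).
  { apply ex_RInt_ext with (fun _ => 0); [|apply ex_RInt_const].
    rewrite Rmin_left, Rmax_right by lra. intros; rewrite G1; auto. }
  assert (E2 : ex_RInt g a b).
  { apply ex_RInt_ext with f; [|apply ex_RInt_cont; auto].
    rewrite Rmin_left, Rmax_right by lra. intros; rewrite G2; auto. }
  assert (E3 : ex_RInt g b M).
  { apply ex_RInt_ext with (fun _ => 0); [|apply ex_RInt_const].
    rewrite Rmin_left, Rmax_right by lra. intros; rewrite G3; auto. }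
  split. apply ex_RInt_Chasles with b; auto. apply ex_RInt_Chasles with a; auto.
  rewrite <- (RInt_Chasles g (-M) b M) by (auto; apply ex_RInt_Chasles with a; auto).
  rewrite <- (RInt_Chasles g (-M) a b) by auto.
  rewrite (RInt_ext g (fun _ => 0) (-M) a)
    by (rewrite Rmin_left, Rmax_right by lra; intros; rewrite G1; auto).
  rewrite (RInt_ext g f a b) by (rewrite Rmin_left, Rmax_right by lra; intros; rewrite G2; auto).
  rewrite (RInt_ext g (fun _ => 0) b M)
    by (rewrite Rmin_left, Rmax_right by lra; intros; rewrite G3; auto).
  rewrite !RInt_const. simpl. unfold plus, scal; simpl. unfold mult; simpl. ring.
Qed.

Lemma RInt_bound f p q B : ex_RInt f p q -> (forall t, Rabs (f t) <= B) ->
  Rabs (RInt f p q) <= Rabs (q - p) * B.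
Proof.
  intros E H. destruct (Rle_dec p q).
  - rewrite (Rabs_right (q - p)) by lra. apply abs_RInt_le_const; auto.
  - rewrite <- (opp_RInt_swap f q p) by (apply ex_RInt_swap; auto). unfold opp; simpl.
    rewrite Rabs_Ropp, (Rabs_left (q - p)) by lra. replace (- (q - p)) with (p - q) by ring.
    apply abs_RInt_le_const; auto. lra. apply ex_RInt_swap; auto.
Qed.

Lemma RInt_perturb f g a1 b1 a2 b2 e B :
  (forall p q, ex_RInt f p q) -> (forall p q, ex_RInt g p q) ->
  (forall t, Rabs (f t - g t) <= e) -> (forall t, Rabs (g t) <= B) ->
  Rabs (RInt f a1 b1 - RInt g a2 b2) <= Rabs (b1 - a1) * e + (Rabs (a2 - a1) + Rabs (b1 - b2)) * B.
Proof.
  intros Ef Eg Hfg Hg.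
  assert (Split : RInt g a1 b1 = RInt g a1 a2 + RInt g a2 b2 + RInt g b2 b1).
  { rewrite <- (RInt_Chasles g a1 a2 b1), <- (RInt_Chasles g a2 b2 b1) by apply Eg.
    unfold plus; simpl. ring. }
  assert (Dif : RInt f a1 b1 - RInt g a1 b1 = RInt (fun t => f t - g t) a1 b1)
    by (symmetry; apply (RInt_minus f g); auto).
  assert (B1 : Rabs (RInt (fun t => f t - g t) a1 b1) <= Rabs (b1 - a1) * e)
    by (apply RInt_bound; auto; apply (ex_RInt_minus f g); auto).
  assert (B2 : Rabs (RInt g a1 a2) <= Rabs (a2 - a1) * B) by (apply RInt_bound; auto).
  assert (B3 : Rabs (RInt g b2 b1) <= Rabs (b1 - b2) * B) by (apply RInt_bound; auto).
  replace (RInt f a1 b1 - RInt g a2 b2) with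
    (RInt (fun t => f t - g t) a1 b1 + RInt g a1 a2 + RInt g b2 b1) by lra.
  eapply Rle_trans. apply Rabs_triang.
  eapply Rle_trans. apply Rplus_le_compat_r. apply Rabs_triang. lra.
Qed.

Lemma BUC_param_integral N M m C (a b : (nat -> R) -> R) : (m < N)%nat -> BUC N C ->
  UC N a -> UC N b -> (forall y, - M <= a y <= b y) -> (forall y, b y <= M) ->
  BUC N (fun y => RInt (fun t => C (upd y m t)) (a y) (b y)).
Proof.
  intros Hm [HBC HC] Ha Hb Hab HbM.
  apply BND_nonneg in HBC as [B0 [HB0 HB]].
  assert (Ex : forall y p q, ex_RInt (fun t => C (upd y m t)) p q)
    by (intros; apply ex_RInt_cont; apply (UC_slice_cont N); auto).
  assert (Len : forall y, Rabs (b y - a y) <= 2 * M)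
    by (intros y; specialize (Hab y); specialize (HbM y); rewrite Rabs_right; lra).
  assert (HM : 0 <= M) by (specialize (Hab (fun _ => 0)); specialize (HbM (fun _ => 0)); lra).
  split.
  - exists ((2 * M) * B0). intros y.
    eapply Rle_trans. apply RInt_bound with (B := B0); auto.
    apply Rmult_le_compat_r; auto.
  - intros eps He.
    set (e1 := eps / (4 * M + 2)). set (e2 := eps / (4 * B0 + 4)).
    assert (He1 : 0 < e1) by (unfold e1; apply Rdiv_lt_0_compat; lra).
    assert (He2 : 0 < e2) by (unfold e2; apply Rdiv_lt_0_compat; lra).
    destruct (HC e1 He1) as [d1 [Hd1 F1]].
    destruct (UC_pair N a b e2 e2 Ha Hb He2 He2) as [d2 [Hd2 F2]].
    exists (Rmin d1 d2). split. apply Rmin_pos; auto.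
    intros y z Hc.
    destruct (F2 y z ltac:(eapply closeN_weaken; [exact Hc|apply Rmin_r])) as [Da Db].
    rewrite Rabs_minus_sym in Da.
    eapply Rle_lt_trans.
    { apply RInt_perturb with (e := e1) (B := B0); try apply Ex; auto.
      intros t. left. apply F1. apply closeN_upd; auto.
      eapply closeN_weaken; [exact Hc|apply Rmin_l]. }
    assert (Rabs (b y - a y) * e1 <= 2 * M * e1) by (apply Rmult_le_compat_r; [lra|apply Len]).
    assert ((Rabs (a z - a y) + Rabs (b y - b z)) * B0 <= 2 * e2 * B0)
      by (apply Rmult_le_compat_r; lra).
    assert (K1 : 2 * M * e1 < eps / 2)
      by (unfold e1; apply Rmult_lt_reg_r with (4 * M + 2); [lra|]; field_simplify; lra).
    assert (K2 : 2 * e2 * B0 < eps / 2)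
      by (unfold e2; apply Rmult_lt_reg_r with (4 * B0 + 4); [lra|]; field_simplify; nra).
    lra.
Qed.

(** * Polyhedra and their one-dimensional slices *)

(* A halfspace {x | a . x <= b} given by (a, b); a polyhedron is a finite list
   of halfspaces, and ind_poly is the indicator of their intersection. *)
Definition halfspace : Type := ((nat -> R) * R)%type.
Definition lin N (a : nat -> R) (x : nat -> R) : R := rsum N (fun j => a j * x j).
Definition ind_half N (h : halfspace) x : R := if Rle_dec (lin N (fst h) x) (snd h) then 1 else 0.
Definition ind_poly N (H : list halfspace) x : R := fold_right (fun h acc => ind_half N h x * acc) 1 H.

Lemma ind_poly_local N H x y : (forall j, (j < N)%nat -> x j = y j) -> ind_poly N H x = ind_poly N H y.
Proof.
  intros E. induction H; simpl; auto. unfold ind_poly in *. simpl. rewrite IHlist. f_equal.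
  unfold ind_half, lin. rewrite (rsum_ext N _ (fun j => fst a j * y j)); auto. intros; rewrite E; auto.
Qed.

(* Along the line t |-> y with y_m := t, a halfspace whose normal has m-th
   coefficient a_m is: the whole line (a_m = 0), or a half-line bounded by the
   crossing point (b - a . y|_{y_m = 0}) / a_m. *)
Definition coef m (h : halfspace) : R := fst h m.
Definition crossing N m (h : halfspace) y : R := (snd h - lin N (fst h) (upd y m 0)) / coef m h.

Definition slice_lo N M m (H : list halfspace) y : R :=
  fold_right (fun h acc => if Rlt_dec (coef m h) 0 then Rmax (crossing N m h y) acc else acc) (- M) H.
Definition slice_hi N M m (H : list halfspace) y : R :=
  fold_right (fun h acc => if Rlt_dec 0 (coef m h) then Rmin (crossing N m h y) acc else acc) M H.
Definition free_of m (H : list halfspace) : list halfspace :=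
  filter (fun h => if Req_EM_T (coef m h) 0 then true else false) H.

Lemma lin_upd N a y m t : (m < N)%nat -> lin N a (upd y m t) = lin N a (upd y m 0) + a m * t.
Proof.
  intros Hm. unfold lin. rewrite (rsum_change N _ (fun j => a j * upd y m 0 j) m Hm).
  rewrite !upd_eq. ring. intros j Hj. rewrite !upd_neq by auto. auto.
Qed.

Lemma ind_half_free N m h y t : (m < N)%nat -> coef m h = 0 -> ind_half N h (upd y m t) = ind_half N h y.
Proof.
  intros Hm Ha. unfold ind_half. rewrite (lin_upd N _ y m t Hm).
  assert (E : lin N (fst h) y = lin N (fst h) (upd y m 0) + fst h m * y m)
    by (rewrite <- (lin_upd N _ y m (y m) Hm), upd_same; auto).
  unfold coef in Ha. rewrite E, Ha, !Rmult_0_l. auto.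
Qed.

Lemma ind_half_pos N m h y t : (m < N)%nat -> 0 < coef m h ->
  ind_half N h (upd y m t) = if Rle_dec t (crossing N m h y) then 1 else 0.
Proof.
  intros Hm Ha. unfold ind_half, crossing. rewrite (lin_upd N _ y m t Hm). unfold coef in *.
  set (r := lin N (fst h) (upd y m 0)). set (a := fst h m). set (b := snd h). fold a in Ha.
  assert (E : (b - r) / a * a = b - r) by (field; lra).
  destruct (Rle_dec (r + a * t) b); destruct (Rle_dec t ((b - r) / a)); auto; exfalso; nra.
Qed.

Lemma ind_half_neg N m h y t : (m < N)%nat -> coef m h < 0 ->
  ind_half N h (upd y m t) = if Rle_dec (crossing N m h y) t then 1 else 0.
Proof.
  intros Hm Ha. unfold ind_half, crossing. rewrite (lin_upd N _ y m t Hm). unfold coef in *.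
  set (r := lin N (fst h) (upd y m 0)). set (a := fst h m). set (b := snd h). fold a in Ha.
  assert (E : (b - r) / a * a = b - r) by (field; lra).
  destruct (Rle_dec (r + a * t) b); destruct (Rle_dec ((b - r) / a) t); auto; exfalso; nra.
Qed.

Lemma ind_poly_slice N M m H y t : (m < N)%nat -> -M <= t <= M ->
  ind_poly N H (upd y m t) = ind_poly N (free_of m H) y *
    (if Rle_dec (slice_lo N M m H y) t then if Rle_dec t (slice_hi N M m H y) then 1 else 0 else 0).
Proof.
  intros Hm Ht. induction H as [|h H IH]; simpl.
  - repeat destruct Rle_dec; try lra.
  - unfold free_of in *. simpl. rewrite IH.
    destruct (Req_EM_T (coef m h) 0) as [E|E].
    + simpl. rewrite (ind_half_free N m h y t Hm E).
      destruct (Rlt_dec (coef m h) 0); [lra|]. destruct (Rlt_dec 0 (coef m h)); [lra|]. ring.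
    + generalize (slice_lo N M m H y) (slice_hi N M m H y) (crossing N m h y)
        (ind_poly N (filter (fun h => if Req_EM_T (coef m h) 0 then true else false) H) y)
        (ind_half_neg N m h y t Hm) (ind_half_pos N m h y t Hm).
      intros L U c X Hneg Hpos.
      destruct (Rlt_dec (coef m h) 0) as [Hn|Hn].
      * rewrite (Hneg Hn). destruct (Rlt_dec 0 (coef m h)); [lra|].
        unfold Rmax. repeat destruct Rle_dec; try ring; exfalso; lra.
      * rewrite (Hpos ltac:(lra)). destruct (Rlt_dec 0 (coef m h)); [|lra].
        unfold Rmin. repeat destruct Rle_dec; try ring; exfalso; lra.
Qed.

Lemma slice_lo_ge N M m H y : - M <= slice_lo N M m H y.
Proof. induction H; simpl. lra. destruct Rlt_dec; auto. eapply Rle_trans; [exact IHlist|apply Rmax_r]. Qed.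

Lemma slice_hi_le N M m H y : slice_hi N M m H y <= M.
Proof. induction H; simpl. lra. destruct Rlt_dec; auto. eapply Rle_trans; [apply Rmin_r|exact IHlist]. Qed.

Lemma UC_crossing N m h : UC N (crossing N m h).
Proof.
  unfold crossing. apply (UC_ext N (fun y => snd h / coef m h + (- / coef m h) * lin N (fst h) (upd y m 0))).
  - apply UC_plus. apply UC_const. apply UC_scal. apply UC_upd. apply UC_lin.
  - intros x. unfold Rdiv. ring.
Qed.

Lemma UC_slice_lo N M m H : UC N (slice_lo N M m H).
Proof.
  induction H as [|h H IH]. apply UC_const.
  apply (UC_ext N (fun y => if Rlt_dec (coef m h) 0 then Rmax (crossing N m h y) (slice_lo N M m H y)
                            else slice_lo N M m H y)); [|intros; reflexivity].
  destruct (Rlt_dec (coef m h) 0); auto. apply UC_max; auto. apply UC_crossing.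
Qed.

Lemma UC_slice_hi N M m H : UC N (slice_hi N M m H).
Proof.
  induction H as [|h H IH]. apply UC_const.
  apply (UC_ext N (fun y => if Rlt_dec 0 (coef m h) then Rmin (crossing N m h y) (slice_hi N M m H y)
                            else slice_hi N M m H y)); [|intros; reflexivity].
  destruct (Rlt_dec 0 (coef m h)); auto. apply UC_min; auto. apply UC_crossing.
Qed.

(* The slice, cut to [-M, M], as an interval [slice_start, slice_end]
   (empty when the two ends coincide). *)
Definition slice_start N M m H y : R := Rmin (slice_lo N M m H y) M.
Definition slice_end N M m H y : R := Rmax (slice_start N M m H y) (slice_hi N M m H y).

Lemma slice_bounds N M m H y : 0 < M ->
  - M <= slice_start N M m H y <= slice_end N M m H y /\ slice_end N M m H y <= M.
Proof.
  intros HM. assert (QL := slice_lo_ge N M m H y). assert (QU := slice_hi_le N M m H y).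
  unfold slice_end, slice_start, Rmax, Rmin. repeat destruct Rle_dec; lra.
Qed.

Lemma slice_integral N M m H C y : 0 < M -> (m < N)%nat -> UC N C ->
  ex_RInt (fun t => ind_poly N H (upd y m t) * C (upd y m t)) (-M) M /\
  RInt (fun t => ind_poly N H (upd y m t) * C (upd y m t)) (-M) M
  = ind_poly N (free_of m H) y * RInt (fun t => C (upd y m t)) (slice_start N M m H y) (slice_end N M m H y).
Proof.
  intros HM Hm HC. destruct (slice_bounds N M m H y HM) as [[Ha Hab] Hb].
  assert (QL := slice_lo_ge N M m H y). assert (QU := slice_hi_le N M m H y).
  assert (Cont : forall t, continuous (fun t => C (upd y m t)) t) by (apply (UC_slice_cont N); auto).
  rewrite <- (RInt_scal (fun t => C (upd y m t))) by (apply ex_RInt_cont; auto).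
  apply RInt_piece; auto.
  - apply (UC_slice_cont N (fun z => ind_poly N (free_of m H) y * C z) y m); auto.
    apply UC_scal; auto.
  - intros t Ht. rewrite (ind_poly_slice N M m H y t) by (auto; lra).
    assert (t < slice_lo N M m H y)
      by (unfold slice_start, Rmin in Ht; destruct Rle_dec in Ht; lra).
    destruct Rle_dec; [lra|]. ring.
  - intros t Ht. rewrite (ind_poly_slice N M m H y t) by (auto; lra).
    assert (slice_lo N M m H y <= t /\ t <= slice_hi N M m H y).
    { unfold slice_end, slice_start, Rmax, Rmin in Ht. repeat destruct Rle_dec in Ht; lra. }
    destruct Rle_dec; [|lra]. destruct Rle_dec; [|lra]. change scal with Rmult. ring.
  - intros t Ht. rewrite (ind_poly_slice N M m H y t) by (auto; lra).
    assert (slice_hi N M m H y < t)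
      by (unfold slice_end, Rmax in Ht; destruct Rle_dec in Ht; lra).
    destruct Rle_dec; [|ring]. destruct Rle_dec; [lra|]. ring.
Qed.

Lemma integrate_slice N M m H C : 0 < M -> (m < N)%nat -> BUC N C ->
  (forall y, ex_RInt (fun t => ind_poly N H (upd y m t) * C (upd y m t)) (-M) M) /\
  exists C', BUC N C' /\ forall y,
    RInt_tot (fun t => ind_poly N H (upd y m t) * C (upd y m t)) (-M) M
    = ind_poly N (free_of m H) y * C' y.
Proof.
  intros HM Hm HC. split; [intros y; apply slice_integral; auto; apply HC|].
  exists (fun y => RInt (fun t => C (upd y m t)) (slice_start N M m H y) (slice_end N M m H y)).
  split.
  - apply (BUC_param_integral N M); auto.
    + apply UC_min. apply UC_slice_lo. apply UC_const.
    + apply UC_max. apply UC_min. apply UC_slice_lo. apply UC_const. apply UC_slice_hi.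
    + intros y. apply slice_bounds; auto.
    + intros y. apply slice_bounds; auto.
  - intros y. destruct (slice_integral N M m H C y HM Hm (proj2 HC)) as [I E].
    rewrite RInt_tot_RInt by apply I. exact E.
Qed.

(** * Iterated integrals of admissible integrands *)

Fixpoint iint (M : R) (m : nat) (F : (nat -> R) -> R) (y : nat -> R) : R :=
  match m with
  | O => F y
  | S m => RInt_tot (fun t => iint M m F (upd y m t)) (- M) M
  end.

(* F is admissible when F = 1_H * C for a polyhedron H and a bounded uniformly
   continuous C; this class is stable under partial integration. *)
Definition admissible_on N (H : list halfspace) (F : (nat -> R) -> R) : Prop :=
  exists C, BUC N C /\ forall x, F x = ind_poly N H x * C x.
Definition admissible N (F : (nat -> R) -> R) : Prop := exists H, admissible_on N H F.

Lemma admissible_iint N M F m : 0 < M -> (m <= N)%nat -> admissible N F -> admissible N (iint M m F).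
Proof.
  intros HM Hm [H [C [HC EF]]]. induction m.
  - exists H, C. split; auto.
  - destruct IHm as [H' [C' [HC' E']]]; [lia|].
    destruct (integrate_slice N M m H' C' HM ltac:(lia) HC') as [_ [C'' [HC'' E'']]].
    exists (free_of m H'), C''. split; auto. intros y. simpl. rewrite <- E''.
    f_equal. extensionality t. apply E'.
Qed.

Lemma iint_integrable N M F m : 0 < M -> (m < N)%nat -> admissible N F ->
  forall y, ex_RInt (fun t => iint M m F (upd y m t)) (-M) M.
Proof.
  intros HM Hm HF y. destruct (admissible_iint N M F m HM ltac:(lia) HF) as [H [C [HC E]]].
  destruct (integrate_slice N M m H C HM Hm HC) as [I _].
  apply ex_RInt_ext with (fun t => ind_poly N H (upd y m t) * C (upd y m t)).
  intros; rewrite E; auto. apply I.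
Qed.

Lemma iint_plus N M F G m y : 0 < M -> (m <= N)%nat -> admissible N F -> admissible N G ->
  iint M m (fun x => F x + G x) y = iint M m F y + iint M m G y.
Proof.
  intros HM Hm HF HG. revert y. induction m; intros y; [reflexivity|]; cbn [iint].
  assert (IF := iint_integrable N M F m HM ltac:(lia) HF y).
  assert (IG := iint_integrable N M G m HM ltac:(lia) HG y).
  rewrite (RInt_tot_RInt _ _ _ IF), (RInt_tot_RInt _ _ _ IG).
  replace (fun t => iint M m (fun x => F x + G x) (upd y m t))
    with (fun t => plus (iint M m F (upd y m t)) (iint M m G (upd y m t)))
    by (extensionality t; rewrite IHm by lia; auto).
  rewrite RInt_tot_RInt by (apply (ex_RInt_plus (V := R_CompleteNormedModule)); auto).
  rewrite (RInt_plus (V := R_CompleteNormedModule)) by auto. reflexivity.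
Qed.

Lemma iint_scal N M F c m y : 0 < M -> (m <= N)%nat -> admissible N F ->
  iint M m (fun x => c * F x) y = c * iint M m F y.
Proof.
  intros HM Hm HF. revert y. induction m; intros y; [reflexivity|]; cbn [iint].
  assert (IF := iint_integrable N M F m HM ltac:(lia) HF y).
  rewrite (RInt_tot_RInt _ _ _ IF).
  replace (fun t => iint M m (fun x => c * F x) (upd y m t))
    with (fun t => scal c (iint M m F (upd y m t))) by (extensionality t; rewrite IHm by lia; auto).
  rewrite RInt_tot_RInt by (apply (ex_RInt_scal (V := R_CompleteNormedModule)); auto).
  rewrite (RInt_scal (V := R_CompleteNormedModule)) by auto. reflexivity.
Qed.

Lemma iint_zero M m y : iint M m (fun _ => 0) y = 0.
Proof.
  revert y; induction m; intros y; [reflexivity|]; cbn [iint].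
  replace (fun t => iint M m (fun _ => 0) (upd y m t)) with (fun _ : R => 0)
    by (extensionality t; rewrite IHm; auto).
  rewrite RInt_tot_RInt by apply ex_RInt_const. rewrite RInt_const.
  unfold scal; simpl. unfold mult; simpl. ring.
Qed.

Lemma admissible_on_rsum N H n (G : nat -> (nat -> R) -> R) :
  (forall j, (j < n)%nat -> admissible_on N H (G j)) ->
  admissible_on N H (fun x => rsum n (fun j => G j x)).
Proof.
  induction n; intros HG; simpl.
  - exists (fun _ => 0). split. apply BUC_const. intros; ring.
  - destruct IHn as [C1 [H1 E1]]; [intros; apply HG; lia|].
    destruct (HG n ltac:(lia)) as [C2 [H2 E2]].
    exists (fun x => C1 x + C2 x). split. apply BUC_plus; auto. intros x. rewrite E1, E2. ring.
Qed.

Lemma iint_rsum N M H n (G : nat -> (nat -> R) -> R) m y : 0 < M -> (m <= N)%nat ->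
  (forall j, (j < n)%nat -> admissible_on N H (G j)) ->
  iint M m (fun x => rsum n (fun j => G j x)) y = rsum n (fun j => iint M m (G j) y).
Proof.
  intros HM Hm HG. induction n; simpl. apply iint_zero.
  rewrite iint_plus with (N := N), IHn; auto.
  - exists H. apply admissible_on_rsum. auto.
  - exists H. apply HG. lia.
Qed.

Lemma iint_mono N M F G m y : 0 < M -> (m <= N)%nat -> admissible N F -> admissible N G ->
  (forall x, F x <= G x) -> iint M m F y <= iint M m G y.
Proof.
  intros HM Hm HF HG Hle. revert y. induction m; intros y; [apply Hle|]; cbn [iint].
  rewrite !RInt_tot_RInt by (apply iint_integrable with N; auto).
  apply RInt_le; try lra; try (apply iint_integrable with N; auto).
  intros t _. apply IHm. lia.
Qed.

Definition glue m (x y : nat -> R) : nat -> R := fun j => if (j <? m)%nat then x j else y j.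

Lemma iint_int_box M m F y : iint M m F y = int_box M m (fun x => F (glue m x y)).
Proof.
  revert F y; induction m; intros F y; cbn [iint int_box]; [reflexivity|].
  apply (f_equal (fun h => RInt_tot h (-M) M)). extensionality t. rewrite IHm.
  f_equal. extensionality x. f_equal. extensionality j. unfold glue, upd.
  destruct (Nat.ltb_spec j m); destruct (Nat.eqb_spec j m); destruct (Nat.ltb_spec j (S m)); auto; lia.
Qed.

Lemma int_box_iint M d F : (forall x x', (forall j, (j < d)%nat -> x j = x' j) -> F x = F x') ->
  int_box M d F = iint M d F (fun _ => 0).
Proof.
  intros HF. rewrite iint_int_box. f_equal. extensionality x. apply HF. intros j Hj. unfold glue.
  destruct (Nat.ltb_spec j d); auto; lia.
Qed.

(** * Integrals of boxes *)

Definition box_ind (p : nat -> R) (r : R) (j : nat) (s : R) : R :=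
  if Rle_dec (p j - r) s then if Rle_dec s (p j + r) then 1 else 0 else 0.

Fixpoint prodn (n : nat) (g : nat -> R) : R :=
  match n with O => 1 | S n => prodn n g * g n end.

Lemma prodn_ext n f g : (forall j, (j < n)%nat -> f j = g j) -> prodn n f = prodn n g.
Proof. induction n; simpl; intros H; auto. rewrite IHn by (intros; apply H; lia). rewrite H by lia. auto. Qed.

Lemma prodn_one n : prodn n (fun _ => 1) = 1.
Proof. induction n; simpl; auto. rewrite IHn; ring. Qed.

Lemma prodn_01 n g : (forall j, (j < n)%nat -> g j = 0 \/ g j = 1) ->
  prodn n g = 0 \/ (prodn n g = 1 /\ forall j, (j < n)%nat -> g j = 1).
Proof.
  induction n; intros H; simpl. right; split; auto; intros; lia.
  destruct IHn as [E|[E1 E2]]. intros; apply H; lia.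
  - left. rewrite E. ring.
  - destruct (H n ltac:(lia)) as [F|F]; rewrite F, E1.
    + left; ring.
    + right. split. ring. intros j Hj. destruct (Nat.eq_dec j n) as [->|]; auto. apply E2. lia.
Qed.

Lemma prodn_upd n (f : nat -> R -> R) y m t : (m < n)%nat ->
  prodn n (fun j => if (m <=? j)%nat then f j (upd y m t j) else 1) =
  prodn n (fun j => if (S m <=? j)%nat then f j (y j) else 1) * f m t.
Proof.
  induction n; intros Hm; [lia|]. cbn [prodn].
  destruct (Nat.eq_dec n m) as [E|E].
  - subst n.
    rewrite (prodn_ext m (fun j => if (m <=? j)%nat then f j (upd y m t j) else 1) (fun _ => 1))
      by (intros j Hj; replace (m <=? j)%nat with false by (symmetry; apply Nat.leb_gt; lia); auto).
    rewrite (prodn_ext m (fun j => if (S m <=? j)%nat then f j (y j) else 1) (fun _ => 1))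
      by (intros j Hj; replace (S m <=? j)%nat with false by (symmetry; apply Nat.leb_gt; lia); auto).
    rewrite Nat.leb_refl, upd_eq. replace (S m <=? m)%nat with false by (symmetry; apply Nat.leb_gt; lia). ring.
  - rewrite IHn by lia. rewrite upd_neq by auto.
    replace (m <=? n)%nat with true by (symmetry; apply Nat.leb_le; lia).
    replace (S m <=? n)%nat with true by (symmetry; apply Nat.leb_le; lia). ring.
Qed.

Lemma iint_box N M (p : nat -> R) r c m y : 0 < r -> (m <= N)%nat ->
  (forall j, (j < N)%nat -> - M <= p j - r /\ p j + r <= M) ->
  iint M m (fun x => c * prodn N (fun j => box_ind p r j (x j))) y =
  c * (2 * r) ^ m * prodn N (fun j => if (m <=? j)%nat then box_ind p r j (y j) else 1).
Proof.
  intros Hr Hm Hp. revert y. induction m; intros y; cbn [iint pow].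
  - rewrite (prodn_ext N (fun j => box_ind p r j (y j))
               (fun j => if (0 <=? j)%nat then box_ind p r j (y j) else 1)); [ring|].
    intros; simpl; auto.
  - set (K := c * (2 * r) ^ m * prodn N (fun j => if (S m <=? j)%nat then box_ind p r j (y j) else 1)).
    replace (fun t => iint M m (fun x => c * prodn N (fun j => box_ind p r j (x j))) (upd y m t))
      with (fun t => K * box_ind p r m t).
    2:{ extensionality t. rewrite IHm by lia. unfold K. rewrite (prodn_upd N (box_ind p r) y m t) by lia. ring. }
    destruct (Hp m ltac:(lia)) as [Hp1 Hp2].
    destruct (RInt_piece (fun _ => K) (fun t => K * box_ind p r m t) (p m - r) (p m + r) M) as [I E];
      try lra.
    + intros; apply continuous_const.
    + intros t Ht. unfold box_ind. destruct Rle_dec; [lra|]. ring.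
    + intros t Ht. unfold box_ind. destruct Rle_dec; [|lra]. destruct Rle_dec; [|lra]. ring.
    + intros t Ht. unfold box_ind. destruct Rle_dec; [|ring]. destruct Rle_dec; [lra|]. ring.
    + rewrite RInt_tot_RInt, E, RInt_const by auto.
      change (scal (p m + r - (p m - r)) K) with ((p m + r - (p m - r)) * K). unfold K. ring.
Qed.

Lemma iint_box_full N M (p : nat -> R) r c y : 0 < r ->
  (forall j, (j < N)%nat -> - M <= p j - r /\ p j + r <= M) ->
  iint M N (fun x => c * prodn N (fun j => box_ind p r j (x j))) y = c * (2 * r) ^ N.
Proof.
  intros Hr Hp. rewrite iint_box with (N := N); auto.
  rewrite (prodn_ext N _ (fun _ => 1)), prodn_one; [ring|].
  intros j Hj. replace (N <=? j)%nat with false by (symmetry; apply Nat.leb_gt; lia). auto.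
Qed.

Definition unit_vec (s : R) (j : nat) : nat -> R := fun i => if (i =? j)%nat then s else 0.

Lemma lin_unit_vec N s j x : (j < N)%nat -> lin N (unit_vec s j) x = s * x j.
Proof.
  intros Hj. unfold lin. rewrite (rsum_change N _ (fun _ => 0) j Hj), rsum_zero.
  - unfold unit_vec. rewrite Nat.eqb_refl. ring.
  - intros i Hi. unfold unit_vec. apply Nat.eqb_neq in Hi. rewrite Hi. ring.
Qed.

Fixpoint box_halfspaces (p : nat -> R) (r : R) (n : nat) : list halfspace :=
  match n with
  | O => nil
  | S n => (unit_vec 1 n, p n + r) :: (unit_vec (-1) n, - (p n - r)) :: box_halfspaces p r n
  end.

Lemma admissible_box N p r c : admissible N (fun x => c * prodn N (fun j => box_ind p r j (x j))).
Proof.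
  exists (box_halfspaces p r N), (fun _ => c). split. apply BUC_const.
  intros x. enough (E : forall n, (n <= N)%nat ->
    ind_poly N (box_halfspaces p r n) x = prodn n (fun j => box_ind p r j (x j))) by (rewrite E; auto; ring).
  induction n; intros Hn; simpl; auto. unfold ind_poly in *. simpl. rewrite IHn by lia.
  unfold ind_half; simpl. rewrite !lin_unit_vec by lia. unfold box_ind.
  repeat destruct Rle_dec; try ring; exfalso; lra.
Qed.

(** * The L^2(K) product *)

Section L2K.
Variables (d : nat) (V : nat -> nat -> R) (c0 : nat -> R) (c : nat -> nat -> R).
Hypothesis Hbary : barycentric d V c0 c.

Definition K_halfspaces : list halfspace :=
  map (fun l => ((fun j => - c l j), c0 l)) (seq 0 (S d)).

Lemma ind_poly_K_seq x n s :
  ind_poly d (map (fun l => ((fun j => - c l j), c0 l)) (seq s n)) x =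
  if excluded_middle_informative
       (forall l, (s <= l < s + n)%nat -> 0 <= aff (c0 l) (c l) d x) then 1 else 0.
Proof.
  revert s; induction n; intros s; simpl.
  - destruct excluded_middle_informative; auto. exfalso. apply n. intros; lia.
  - unfold ind_poly in *. simpl. rewrite IHn.
    assert (Half : ind_half d ((fun j => - c s j), c0 s) x
                   = if Rle_dec 0 (aff (c0 s) (c s) d x) then 1 else 0).
    { unfold ind_half, aff, lin. simpl.
      rewrite (rsum_ext d _ (fun j => -1 * (c s j * x j))), rsum_scal by (intros; ring).
      destruct Rle_dec; destruct Rle_dec; auto; lra. }
    rewrite Half.
    destruct Rle_dec as [r|n0]; destruct excluded_middle_informative as [A|A];
      destruct excluded_middle_informative as [B|B]; try ring; exfalso.
    all: first [ apply B; intros l Hl; destruct (Nat.eq_dec l s) as [->|]; auto; apply A; lia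
               | apply A; intros; apply B; lia
               | apply n0; apply B; lia ].
Qed.

Lemma indK_poly x : indK d V x = ind_poly d K_halfspaces x.
Proof.
  unfold K_halfspaces. rewrite ind_poly_K_seq. unfold indK.
  destruct excluded_middle_informative as [A|A]; destruct excluded_middle_informative as [B|B]; auto.
  - exfalso. apply B. intros l Hl. apply (bary_nonneg d V c0 c Hbary x A). lia.
  - exfalso. apply A. apply (simplex_of_bary d V c0 c Hbary). intros l Hl. apply B. lia.
Qed.

Lemma admissible_K P kP : is_poly d kP P ->
  admissible_on d K_halfspaces (fun x => indK d V x * P x).
Proof.
  intros HP. exists (fun x => P (clip (Defs.bound d V) x)). split; [apply BUC_poly_clip with kP; auto|].
  intros x. rewrite <- indK_poly. unfold indK. destruct excluded_middle_informative as [Hx|Hx]; [|ring].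
  f_equal. apply poly_local with d kP; auto. intros j Hj. unfold clip.
  rewrite clip_id; auto. apply (simplex_bound d V); auto.
Qed.

Lemma int_K_iint P kP : is_poly d kP P ->
  int_box (Defs.bound d V) d (fun x => indK d V x * P x)
  = iint (Defs.bound d V) d (fun x => indK d V x * P x) (fun _ => 0).
Proof.
  intros HP. apply int_box_iint. intros x x' E. rewrite !indK_poly, (ind_poly_local d _ x x' E).
  f_equal. apply poly_local with d kP; auto.
Qed.

Lemma bound_pos : 0 < Defs.bound d V.
Proof.
  unfold Defs.bound. assert (0 <= rsum (S d) (fun i => rsum d (fun j => Rabs (V i j)))); [|lra].
  apply rsum_nonneg. intros. apply rsum_nonneg. intros. apply Rabs_pos.
Qed.

Lemma ipK_lin_comb n (a : nat -> R) (q : nat -> (nat -> R) -> R) v kq kv :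
  (forall j, (j < n)%nat -> is_poly d kq (q j)) -> is_poly d kv v ->
  ipK d V (fun x => rsum n (fun j => a j * q j x)) v = rsum n (fun j => a j * ipK d V (q j) v).
Proof.
  intros Hq Hv. set (M := Defs.bound d V). assert (HM : 0 < M) by apply bound_pos.
  assert (Pq : forall j, (j < n)%nat -> is_poly d (kq + kv) (fun x => a j * (q j x * v x)))
    by (intros; apply poly_scal, poly_mul; auto).
  unfold ipK. fold M.
  replace (fun x => indK d V x * (rsum n (fun j => a j * q j x) * v x))
    with (fun x => rsum n (fun j => indK d V x * (a j * (q j x * v x)))).
  2:{ extensionality x. rewrite (rsum_ext n _ (fun j => (indK d V x * v x) * (a j * q j x)))
        by (intros; ring). rewrite rsum_scal. ring. }
  rewrite int_box_iint.
  2:{ intros x x' E. apply rsum_ext. intros j Hj. rewrite !indK_poly, (ind_poly_local d _ x x' E).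
      f_equal. apply (poly_local d (kq + kv) (fun x => a j * (q j x * v x))); auto. }
  rewrite iint_rsum with (N := d) (H := K_halfspaces) by (auto; intros; apply admissible_K with (kq + kv)%nat; auto).
  apply rsum_ext. intros j Hj.
  replace (fun x => indK d V x * (a j * (q j x * v x)))
    with (fun x => a j * (indK d V x * (q j x * v x))) by (extensionality x; ring).
  rewrite iint_scal with (N := d); auto.
  - unfold M. rewrite <- int_K_iint with (kP := (kq + kv)%nat); auto. apply poly_mul; auto.
  - exists K_halfspaces. apply admissible_K with (kq + kv)%nat. apply poly_mul; auto.
Qed.

Lemma box_in_K_bounds y0 r : 0 <= r ->
  (forall y, (forall j, (j < d)%nat -> Rabs (y j - y0 j) <= r) -> in_simplex d V y) ->
  forall j, (j < d)%nat -> - Defs.bound d V <= y0 j - r /\ y0 j + r <= Defs.bound d V.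
Proof.
  intros Hr Hbox j Hj.
  assert (Edge : forall s, Rabs s <= r -> Rabs (y0 j + s) < Defs.bound d V).
  { intros s Hs. rewrite <- (upd_eq y0 j (y0 j + s)). apply (simplex_bound d V); auto.
    apply Hbox. intros m Hm. destruct (Nat.eq_dec m j) as [->|Hmj].
    - rewrite upd_eq. replace (y0 j + s - y0 j) with s by ring. lra.
    - rewrite upd_neq, Rminus_eq_0, Rabs_R0 by auto. lra. }
  assert (P1 := Edge r ltac:(rewrite Rabs_right; lra)).
  assert (P2 := Edge (- r) ltac:(rewrite Rabs_Ropp, Rabs_right; lra)).
  apply Rabs_def2 in P1. apply Rabs_def2 in P2. lra.
Qed.

Lemma poly_cont_in_K g kg y0 r eps : is_poly d kg g -> 0 < r -> 0 < eps ->
  (forall y, (forall j, (j < d)%nat -> Rabs (y j - y0 j) <= r) -> in_simplex d V y) ->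
  exists r1, 0 < r1 <= r /\ forall x, (forall j, (j < d)%nat -> Rabs (x j - y0 j) <= r1) ->
    in_simplex d V x /\ Rabs (g x - g y0) < eps.
Proof.
  intros Hg Hr Heps Hbox. set (M := Defs.bound d V).
  assert (Clip : forall x, in_simplex d V x -> g (clip M x) = g x).
  { intros x Hx. apply poly_local with d kg; auto. intros j Hj. unfold clip.
    apply clip_id. apply (simplex_bound d V); auto. }
  destruct (BUC_poly_clip d kg g M Hg) as [_ Ug].
  destruct (Ug eps Heps) as [del [Hdel Fg]].
  exists (Rmin r (del / 2)). split; [split; [apply Rmin_pos; lra|apply Rmin_l]|].
  assert (Hr1 : Rmin r (del / 2) < del) by (eapply Rle_lt_trans; [apply Rmin_r|lra]).
  intros x Near.
  assert (Hx : in_simplex d V x).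
  { apply Hbox. intros j Hj. eapply Rle_trans; [apply Near; auto|apply Rmin_l]. }
  assert (Hy0 : in_simplex d V y0) by (apply Hbox; intros; rewrite Rminus_eq_0, Rabs_R0; lra).
  split; auto. rewrite <- (Clip x), <- (Clip y0) by auto.
  apply Fg. intros j Hj. specialize (Near j Hj). lra.
Qed.

(* A polynomial that is nonnegative on K and has zero integral over K
   vanishes at every point y0 around which a whole box lies in K: otherwise
   it would exceed g(y0)/2 on a small box, of positive integral. *)
Lemma nonneg_zero_integral g kg : is_poly d kg g ->
  (forall x, in_simplex d V x -> 0 <= g x) ->
  int_box (Defs.bound d V) d (fun x => indK d V x * g x) = 0 ->
  forall y0 r, 0 < r -> (forall y, (forall j, (j < d)%nat -> Rabs (y j - y0 j) <= r) -> in_simplex d V y) ->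
  g y0 = 0.
Proof.
  intros Hg Hpos Hint y0 r Hr Hbox.
  set (M := Defs.bound d V). assert (HM : 0 < M) by apply bound_pos.
  assert (Hy0 : in_simplex d V y0) by (apply Hbox; intros; rewrite Rminus_eq_0, Rabs_R0; lra).
  destruct (Hpos y0 Hy0) as [Gpos|]; auto. exfalso.
  destruct (poly_cont_in_K g kg y0 r (g y0 / 2) Hg Hr ltac:(lra) Hbox) as [r1 [[Hr1 Hr1r] Near]].
  set (Fb := fun x => g y0 / 2 * prodn d (fun j => box_ind y0 r1 j (x j))).
  set (FK := fun x => indK d V x * g x).
  assert (Hle : forall x, Fb x <= FK x).
  { intros x. unfold Fb, FK.
    destruct (prodn_01 d (fun j => box_ind y0 r1 j (x j))) as [E|[E1 E2]].
    - intros; unfold box_ind; repeat destruct Rle_dec; auto.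
    - rewrite E. unfold indK. destruct excluded_middle_informative as [Hx|Hx]; [|lra].
      specialize (Hpos x Hx). lra.
    - destruct (Near x) as [Hx Close].
      { intros j Hj. specialize (E2 j Hj). unfold box_ind in E2. apply Rabs_le.
        repeat destruct Rle_dec in E2; lra. }
      apply Rabs_def2 in Close.
      rewrite E1. unfold indK. destruct excluded_middle_informative; [lra|contradiction]. }
  assert (Box : iint M d Fb (fun _ => 0) = g y0 / 2 * (2 * r1) ^ d).
  { apply iint_box_full; auto. apply box_in_K_bounds; [lra|].
    intros y Hy. apply Hbox. intros j Hj. specialize (Hy j Hj). lra. }
  assert (Zero : iint M d FK (fun _ => 0) = 0)
    by (unfold FK; rewrite <- int_K_iint with (kP := kg); auto).
  assert (Mono := iint_mono d M Fb FK d (fun _ => 0) HM (le_n d) (admissible_box d y0 r1 (g y0 / 2))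
                    (ex_intro _ K_halfspaces (admissible_K g kg Hg)) Hle).
  rewrite Box, Zero in Mono. assert (0 < (2 * r1) ^ d) by (apply pow_lt; lra). nra.
Qed.

End L2K.

(** * The two parts of the lemma *)

Section Lemma21.
Variables (d : nat) (V : nat -> nat -> R) (c0 : nat -> R) (c : nat -> nat -> R).
Hypothesis Hd : (1 <= d)%nat.
Hypothesis Hbary : barycentric d V c0 c.

Lemma face_factorization k u i : is_poly d k u -> (i <= d)%nat ->
  (forall x, in_face d V i x -> u x = 0) ->
  exists w, is_poly_prev d k w /\ forall x, in_simplex d V x -> u x = aff (c0 i) (c i) d x * w x.
Proof.
  intros Hu Hi Hface.
  set (o := if Nat.eqb i 0 then 1%nat else 0%nat).
  assert (Ho : (o <= d)%nat /\ o <> i) by (unfold o; destruct (Nat.eqb_spec i 0); lia).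
  destruct (taylor_division d k u (c0 i) (c i) (fun j => V i j - V o j) Hu) as [w [Hw Ew]].
  exists w. split; auto. intros x Hx.
  rewrite Ew, Hface; [ring|]. apply slide_to_face; tauto.
Qed.

(* (a): u = lambda_i w on K and (u, w)_K = 0 make lambda_i w^2 vanish on an
   interior box of K, where lambda_i > 0; so u vanishes there, hence everywhere. *)
Lemma part_a k u i : Pperp d V k u -> (i <= d)%nat ->
  (forall x, in_face d V i x -> u x = 0) -> forall x, u x = 0.
Proof.
  intros [Hu Horth] Hi Hface.
  destruct (face_factorization k u i Hu Hi Hface) as [w [Hw OnK]].
  destruct (prev_poly d k w Hw) as [kw Hkw].
  set (lam := fun x => aff (c0 i) (c i) d x).
  assert (Hint : int_box (Defs.bound d V) d (fun x => indK d V x * (lam x * (w x * w x))) = 0).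
  { rewrite <- (Horth w Hw). unfold ipK. f_equal. extensionality x. unfold indK.
    destruct excluded_middle_informative as [Hx|]; [|ring]. rewrite OnK by auto. unfold lam. ring. }
  destruct (interior_box d V c0 c Hbary) as [xb [rho [Hrho Hpos]]].
  assert (InK : forall y, (forall j, (j < d)%nat -> Rabs (y j - xb j) <= 2 * rho) -> in_simplex d V y)
    by (intros y Hy; apply (simplex_of_bary d V c0 c Hbary); intros l Hl; left; apply Hpos; auto).
  apply poly_box_zero with d k xb rho; auto.
  intros y Hy.
  assert (HyK : in_simplex d V y) by (apply InK; intros j Hj; specialize (Hy j Hj); lra).
  assert (Zero : lam y * (w y * w y) = 0).
  { apply (nonneg_zero_integral d V c0 c Hbary (fun x => lam x * (w x * w x)) (1 + (kw + kw)))
      with rho; auto.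
    - apply poly_mul. apply poly_aff. lia. apply poly_mul; auto.
    - intros x Hx. assert (0 <= lam x) by (apply (bary_nonneg d V c0 c Hbary); auto).
      assert (0 <= w x * w x) by nra. nra.
    - intros z Hz. apply InK. intros j Hj.
      replace (z j - xb j) with ((z j - y j) + (y j - xb j)) by ring.
      eapply Rle_trans. apply Rabs_triang. specialize (Hz j Hj). specialize (Hy j Hj). lra. }
  assert (0 < lam y) by (apply Hpos; auto; intros j Hj; specialize (Hy j Hj); lra).
  assert (Hwy : w y = 0) by (apply Rmult_integral in Zero as [Z|Z]; nra).
  rewrite OnK, Hwy by auto. ring.
Qed.

(* (b): each c_l . q is in P_k^perp and vanishes on the face opposite V_l, hence is
   zero by (a); then q = sum_l (c_l . q) V_l = 0. *)
Lemma part_b k (q : nat -> (nat -> R) -> R) :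
  (forall j, (j < d)%nat -> Pperp d V k (q j)) ->
  (forall i, (i <= d)%nat -> forall n, outward_unit_normal d V i n ->
        forall x, in_face d V i x -> dot d (fun j => q j x) n = 0) ->
  forall j, (j < d)%nat -> forall x, q j x = 0.
Proof.
  intros Hq Hn.
  assert (Normal_zero : forall l, (l <= d)%nat -> forall x, rsum d (fun j => c l j * q j x) = 0).
  { intros l Hl. apply (part_a k _ l); auto.
    - split.
      + apply poly_rsum. intros j Hj. apply poly_scal. apply (Hq j Hj).
      + intros v Hv. destruct (prev_poly d k v Hv) as [kv Hkv].
        rewrite (ipK_lin_comb d V c0 c Hbary d (c l) q v k kv) by (auto; intros; apply Hq; auto).
        rewrite (rsum_ext d _ (fun _ => 0)), rsum_zero; auto.
        intros j Hj. destruct (Hq j Hj) as [_ Ho]. rewrite Ho by auto. ring.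
    - intros x Hx. destruct (outward_normal_of_bary d V c0 c Hbary l Hd Hl) as [HD Hnor].
      specialize (Hn l Hl _ Hnor x Hx).
      set (s := sqrt (dot d (c l) (c l))) in Hn.
      assert (Hs : 0 < s) by (apply sqrt_lt_R0; auto).
      unfold dot in Hn.
      rewrite (rsum_ext d _ (fun j => (- / s) * (c l j * q j x))), rsum_scal in Hn
        by (intros; field; lra).
      assert (0 < / s) by (apply Rinv_0_lt_compat; auto). nra. }
  intros j Hj x. destruct Hbary as [_ [_ Recon]].
  rewrite <- (Recon (fun m => q m x) j Hj), <- (Recon (fun _ => 0) j Hj).
  apply rsum_ext. intros l Hl. f_equal. unfold aff. rewrite Normal_zero by lia.
  rewrite (rsum_ext d _ (fun _ => 0)), rsum_zero by (intros; ring). ring.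
Qed.

End Lemma21.

Theorem lemma2p1 (d : nat) (V : nat -> nat -> R) (k : nat) :
  (d = 2%nat \/ d = 3%nat) ->
  nondegenerate d V ->
  (* (a) *)
  (forall u : (nat -> R) -> R,
     Pperp d V k u ->
     forall i, (i <= d)%nat ->
     (forall x, in_face d V i x -> u x = 0) ->
     forall x, u x = 0) /\
  (* (b) *)
  (forall q : nat -> (nat -> R) -> R,
     (forall j, (j < d)%nat -> Pperp d V k (q j)) ->
     (forall i, (i <= d)%nat -> forall n, outward_unit_normal d V i n ->
        forall x, in_face d V i x -> dot d (fun j => q j x) n = 0) ->
     forall j, (j < d)%nat -> forall x, q j x = 0).
Proof.
  intros Hdim Hnd. assert (Hd : (1 <= d)%nat) by lia.
  destruct (BarycentricCoordinates.existence d V Hnd) as [c0 [c Hbary]].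
  split.
  - intros u Hu i Hi Hface. exact (part_a d V c0 c Hd Hbary k u i Hu Hi Hface).
  - intros q Hq Hn. exact (part_b d V c0 c Hd Hbary k q Hq Hn).
Qed.
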